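(* In the discrete model, let $s\in\mathcal S$ be a regular point. Let $\hat F_n$ be a maximum likelihood estimator, $\tilde F_n$ a naive estimator, and $\breve F_n$ the simple estimator $\breve F_{nk}(s)=N_k(s)/N(s)$ (with $0/0=0$). Then $$P\{\hat F_n(s)=\tilde F_n(s)=\breve F_n(s)\}\to 1\quad\text{as } n\to\infty.$$
   Context: Setting (discrete model): $K\ge1$ fixed; $(X,Y)$ random with $X\in\mathbb R$, $Y\in\{1,\dots,K\}$; $F_{0k}(t)=P(X\le t,Y=k)$, $k=1,\dots,K$. $C$ is independent of $(X,Y)$ with discrete distribution $G$, support $\mathcal S=\{s:G(\{s\})>0\}$ (countable, possibly infinite). Observed: $(C,\Delta)$, $\Delta_k=1\{X\le C,Y=k\}$ ($k\le K$), $\Delta_{K+1}=1\{X>C\}$; data are $n$ i.i.d. copies $(C_i,\Delta^i)$. Define $N_k(s)=\frac1n\sum_i\Delta_k^i1\{C_i=s\}$, $N(s)=\sum_{k=1}^{K+1}N_k(s)$. For a $K$-tuple $F$, $F_+=\sum_{k\le K}F_k$, $F_{K+1}=1-F_+$. $\mathcal F_K$ is the set of $K$-tuples $F=(F_1,\dots,F_K)$ of nonnegative nondecreasing functions with $F_+(s)\le1$ (constraints needed only at $s\in\mathcal S$). Log likelihood $l_n(F)=\sum_{s\in\mathcal S}\sum_{k=1}^{K+1}N_k(s)\log F_k(s)$ (convention $0\log0=0$). A maximum likelihood estimator is any $\hat F_n\in\mathcal F_K$ maximizing $l_n$ over $\mathcal F_K$. The naive estimator $\tilde F_n=(\tilde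 F_{n1},\dots,\tilde F_{nK})$ has $k$th component any maximizer over $\mathcal F_1$ (the case $K=1$ of $\mathcal F_K$) of $l_{nk}(F_k)=\sum_{s\in\mathcal S}[N_k(s)\log F_k(s)+\{N(s)-N_k(s)\}\log\{1-F_k(s)\}]$. Regular point: let $s_{\inf}=\inf\mathcal S$, $s_{\sup}=\sup\mathcal S$; for $s\in\mathcal S$, $s\ne s_{\inf}$, let $s_-=\sup\{x\in\mathcal S:x<s\}$, and for $s\ne s_{\sup}$ let $s_+=\inf\{x\in\mathcal S:x>s\}$. A point $s\in\mathcal S$ is regular if either $F_{0k}(s)=0$ for all $k=1,\dots,K$, or both: (i) if $s\ne s_{\inf}$ then $s_-\in\mathcal S$ and for each $k$ either $F_{0k}(s_-)<F_{0k}(s)$ or $F_{0k}(s)=0$; (ii) if $s\ne s_{\sup}$ then $s_+\in\mathcal S$ and for each $k$ either $F_{0k}(s)<F_{0k}(s_+)$ or $F_{0k}(s)=0$. *)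

From Stdlib Require Import Reals Lra List.
Import ListNotations.
Open Scope R_scope.

(* ---------- Model ----------
   Failure causes are indexed k = 0..K-1 (paper's k = 1..K); index K stands
   for the paper's K+1 (right censoring).  A K-tuple of functions is a
   function F : nat -> R -> R of which only components k < K matter.

   The discrete censoring law G is given by an enumeration c : nat -> R of
   atoms with weights w : nat -> R (w i >= 0, sum w = 1), so that
   G({s}) = sum_{i : c i = s} w i and S = { s | exists i, w i > 0 /\ c i = s }.

   An observation (C_j, Delta^j) is encoded as a pair (i, k) : nat * nat,
   meaning C_j = c i and Delta_k = 1 (k <= K).  A data set is a list of
   n such pairs. *)

Definition inS (c w : nat -> R) (s : R) : Prop :=
  exists i, 0 < w i /\ c i = s.

Definition Fplus (K : nat) (F : nat -> R -> R) (s : R) : R :=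
  fold_right Rplus 0 (map (fun k => F k s) (seq 0 K)).

Definition Fext (K : nat) (F : nat -> R -> R) (k : nat) (s : R) : R :=
  if Nat.ltb k K then F k s else 1 - Fplus K F s.

(* F0 is the K-tuple of sub-distribution functions F_{0k}(t) = P(X<=t, Y=k)
   of some random pair (X,Y) with X real, Y in {1..K}: each component is
   nondecreasing, right-continuous, tends to 0 at -oo, has a limit at +oo,
   and these limits sum to 1. *)
Definition valid_F0 (K : nat) (F0 : nat -> R -> R) : Prop :=
  (forall k, (k < K)%nat -> forall t u, t <= u -> F0 k t <= F0 k u) /\
  (forall k, (k < K)%nat -> forall t eps, 0 < eps ->
      exists d, 0 < d /\ forall u, t <= u < t + d -> Rabs (F0 k u - F0 k t) < eps) /\
  (forall k, (k < K)%nat -> forall eps, 0 < eps ->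
      exists M, forall t, t <= M -> Rabs (F0 k t) < eps) /\
  (exists Lim : nat -> R,
      (forall k, (k < K)%nat -> forall eps, 0 < eps ->
          exists M, forall t, M <= t -> Rabs (F0 k t - Lim k) < eps) /\
      fold_right Rplus 0 (map Lim (seq 0 K)) = 1).

Definition is_glb (E : R -> Prop) (m : R) : Prop :=
  (forall x, E x -> m <= x) /\ (forall b, (forall x, E x -> b <= x) -> b <= m).

Definition regular (K : nat) (F0 : nat -> R -> R) (c w : nat -> R) (s : R) : Prop :=
  (forall k, (k < K)%nat -> F0 k s = 0) \/
  (
    ((exists x, inS c w x /\ x < s) ->
       exists sm, is_lub (fun x => inS c w x /\ x < s) sm /\ inS c w sm /\
         forall k, (k < K)%nat -> F0 k sm < F0 k s \/ F0 k s = 0) /\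
    ((exists x, inS c w x /\ s < x) ->
       exists sp, is_glb (fun x => inS c w x /\ s < x) sp /\ inS c w sp /\
         forall k, (k < K)%nat -> F0 k s < F0 k sp \/ F0 k s = 0) ).

Definition obs := (nat * nat)%type.

Definition valid_data (K : nat) (w : nat -> R) (data : list obs) : Prop :=
  Forall (fun o => 0 < w (fst o) /\ (snd o <= K)%nat) data.

Definition Nk (c : nat -> R) (data : list obs) (k : nat) (s : R) : R :=
  INR (length (filter (fun o => andb (Nat.eqb (snd o) k)
                                    (if Req_EM_T (c (fst o)) s then true else false)) data))
  / INR (length data).

Definition Ntot (K : nat) (c : nat -> R) (data : list obs) (s : R) : R :=
  fold_right Rplus 0 (map (fun k => Nk c data k s) (seq 0 (S K))).

Definition breve (K : nat) (c : nat -> R) (data : list obs) (k : nat) (s : R) : R :=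
  if Req_EM_T (Ntot K c data s) 0 then 0 else Nk c data k s / Ntot K c data s.

(* the class F_K (constraints only at points of S) *)
Definition inFK (K : nat) (c w : nat -> R) (F : nat -> R -> R) : Prop :=
  (forall k, (k < K)%nat -> forall s, inS c w s -> 0 <= F k s) /\
  (forall k, (k < K)%nat -> forall s t, inS c w s -> inS c w t -> s <= t -> F k s <= F k t) /\
  (forall s, inS c w s -> Fplus K F s <= 1).

Definition inF1 (c w : nat -> R) (H : R -> R) : Prop :=
  inFK 1 c w (fun _ => H).

(* Likelihood L_n(F) = prod_j F_{k_j}(C_j) = exp(n * l_n(F)); maximizing l_n
   (with 0 log 0 = 0, log 0 = -oo) is the same as maximizing L_n. *)
Definition lik (K : nat) (c : nat -> R) (data : list obs) (F : nat -> R -> R) : R :=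
  fold_right Rmult 1 (map (fun o => Fext K F (snd o) (c (fst o))) data).

Definition isMLE (K : nat) (c w : nat -> R) (data : list obs) (F : nat -> R -> R) : Prop :=
  inFK K c w F /\ forall G, inFK K c w G -> lik K c data G <= lik K c data F.

Definition likk (c : nat -> R) (data : list obs) (k : nat) (H : R -> R) : R :=
  fold_right Rmult 1
    (map (fun o => if Nat.eqb (snd o) k then H (c (fst o)) else 1 - H (c (fst o))) data).

Definition isNaive (K : nat) (c w : nat -> R) (data : list obs) (F : nat -> R -> R) : Prop :=
  forall k, (k < K)%nat ->
    inF1 c w (F k) /\ forall H, inF1 c w H -> likk c data k H <= likk c data k (F k).

(* P(C = c i, Delta_k = 1) *)
Definition pobs (K : nat) (F0 : nat -> R -> R) (c w : nat -> R) (o : obs) : R :=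
  if Nat.leb (snd o) K then w (fst o) * Fext K F0 (snd o) (c (fst o)) else 0.

Definition psample (K : nat) (F0 : nat -> R -> R) (c w : nat -> R) (data : list obs) : R :=
  fold_right Rmult 1 (map (pobs K F0 c w) data).

Definition event_at (K : nat) (c : nat -> R) (Fhat Ftil : list obs -> nat -> R -> R)
    (s : R) (data : list obs) : Prop :=
  forall k, (k < K)%nat ->
    Fhat data k s = Ftil data k s /\ Ftil data k s = breve K c data k s.

(* Call a sample good when, for finitely many cells
   (atom i with label l; atom i with label <> k; censoring at s with label
   k), the empirical count is within n dl of its expectation.  On a good
   sample:
   - the MLE inequality  sum_j 2 G_j / (G_j + F_j) <= n  (compare F with the
     admissible midpoint (F+G)/2) plus a Hellinger-type bound force the MLE
     F to be close to the truth at every heavy atom, in particular at the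
     neighbours s_- and s_+ given by regularity (mle_close_at_atom);
   - hence F at s_- (resp. s_+) lies below (resp. above) the simple
     estimator at s, so replacing F at s by the simple estimator keeps the
     tuple admissible and does not lower the likelihood away from s; Gibbs'
     inequality then shows that F at s already is the simple estimator
     (mle_at_s_is_breve, mle_equals_breve);
   - each component of the naive estimator is the MLE of a model with a
     single label on relabelled data, so the same argument applies
     (naive_equals_breve); good_sample_event collects these facts.  Enumerating all samples of size n over a finite
   truncation of the support, the first two moments of the cell counts give
   a Chebyshev bound: good samples carry mass at least 1 - eps for n large
   (sample_concentration). *)

From Stdlib Require Import Reals Lra Lia List Classical Bool ZArith.
Import ListNotations.
Open Scope R_scope.

(** * Finite sums and products over lists *)

Definition sumL {A} (f : A -> R) (l : list A) : R := fold_right (fun a r => f a + r) 0 l.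
Definition prodL {A} (f : A -> R) (l : list A) : R := fold_right (fun a r => f a * r) 1 l.

Lemma fold_sumL {A} (f : A -> R) l : fold_right Rplus 0 (map f l) = sumL f l.
Proof. induction l; simpl; auto. rewrite IHl; auto. Qed.

Lemma sumL_app {A} (f : A -> R) l1 l2 : sumL f (l1 ++ l2) = sumL f l1 + sumL f l2.
Proof. induction l1; simpl; [lra|]. unfold sumL in *; simpl in *. rewrite IHl1; lra. Qed.

Lemma sumL_ext {A} (f g : A -> R) l : (forall a, In a l -> f a = g a) -> sumL f l = sumL g l.
Proof.
  induction l; intros H; simpl; auto.
  rewrite (H a) by (left; auto). rewrite IHl; auto. intros; apply H; right; auto.
Qed.

Lemma sumL_le {A} (f g : A -> R) l : (forall a, In a l -> f a <= g a) -> sumL f l <= sumL g l.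
Proof.
  induction l; intros H; simpl; [lra|].
  assert (f a <= g a) by (apply H; left; auto).
  assert (sumL f l <= sumL g l) by (apply IHl; intros; apply H; right; auto).
  unfold sumL in *; simpl; lra.
Qed.

Lemma sumL_plus {A} (f g : A -> R) l : sumL (fun a => f a + g a) l = sumL f l + sumL g l.
Proof. induction l; simpl; [lra|]. unfold sumL in *; simpl in *; rewrite IHl; lra. Qed.

Lemma sumL_minus {A} (f g : A -> R) l : sumL (fun a => f a - g a) l = sumL f l - sumL g l.
Proof. induction l; simpl; [lra|]. unfold sumL in *; simpl in *; rewrite IHl; lra. Qed.

Lemma sumL_scal {A} (f : A -> R) r l : sumL (fun a => r * f a) l = r * sumL f l.
Proof. induction l; simpl; [lra|]. unfold sumL in *; simpl in *; rewrite IHl; lra. Qed.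

Lemma sumL_const {A} r (l : list A) : sumL (fun _ => r) l = r * INR (length l).
Proof.
  induction l; [simpl; lra|]. change (length (a :: l)) with (S (length l)).
  rewrite S_INR. unfold sumL in *; cbn [fold_right]. rewrite IHl. lra.
Qed.

Lemma sumL_zero {A} (l : list A) : sumL (fun _ => 0) l = 0.
Proof. rewrite sumL_const; ring. Qed.

Lemma sumL_nonneg {A} (f : A -> R) l : (forall a, In a l -> 0 <= f a) -> 0 <= sumL f l.
Proof. intros H. rewrite <- (sumL_zero l). apply sumL_le; auto. Qed.

Lemma sumL_map {A B} (f : B -> R) (g : A -> B) l : sumL f (map g l) = sumL (fun a => f (g a)) l.
Proof. induction l; simpl; auto. unfold sumL in *; simpl in *; rewrite IHl; auto. Qed.

Lemma sumL_flat_map {A B} (f : B -> R) (g : A -> list B) l :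
  sumL f (flat_map g l) = sumL (fun a => sumL f (g a)) l.
Proof. induction l; simpl; auto. rewrite sumL_app, IHl. reflexivity. Qed.

Lemma sumL_filter {A} (h : A -> R) g l :
  sumL h (filter g l) = sumL (fun x => if g x then h x else 0) l.
Proof. induction l; simpl; auto. destruct (g a); unfold sumL in *; simpl; rewrite IHl; ring. Qed.

Lemma sumL_seq_last (f : nat -> R) m : sumL f (seq 0 (S m)) = sumL f (seq 0 m) + f m.
Proof. rewrite seq_S, sumL_app. unfold sumL at 2; simpl. ring. Qed.

Lemma sumL_swap {A B} (f : A -> B -> R) l1 l2 :
  sumL (fun a => sumL (fun b => f a b) l2) l1 = sumL (fun b => sumL (fun a => f a b) l1) l2.
Proof.
  induction l1; simpl.
  - symmetry. apply sumL_zero.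
  - change (sumL (fun b => f a b) l2 + sumL (fun a0 => sumL (fun b => f a0 b) l2) l1 =
      sumL (fun b => f a b + sumL (fun a0 => f a0 b) l1) l2).
    rewrite IHl1, sumL_plus. reflexivity.
Qed.

Lemma sumL_single {A} (f : A -> R) l x :
  (forall a, In a l -> 0 <= f a) -> In x l -> f x <= sumL f l.
Proof.
  induction l; intros H Hx; simpl in Hx; [contradiction|].
  unfold sumL; simpl; fold (sumL f l).
  assert (0 <= f a) by (apply H; left; auto).
  assert (0 <= sumL f l) by (apply sumL_nonneg; intros; apply H; right; auto).
  destruct Hx as [<-|Hx]; [lra|].
  assert (f x <= sumL f l) by (apply IHl; auto; intros; apply H; right; auto). lra.
Qed.

Lemma sumL_zero_each {A} (f : A -> R) l :
  (forall a, In a l -> 0 <= f a) -> sumL f l = 0 -> forall a, In a l -> f a = 0.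
Proof. intros H Hs a Ha. pose proof (sumL_single f l a H Ha). pose proof (H a Ha). lra. Qed.

Lemma sumL_abs {A} (f : A -> R) l : Rabs (sumL f l) <= sumL (fun a => Rabs (f a)) l.
Proof.
  induction l; simpl. unfold sumL; simpl; rewrite Rabs_R0; lra.
  unfold sumL in *; simpl. eapply Rle_trans. apply Rabs_triang. lra.
Qed.

Lemma Rabs_le_inv x e : Rabs x <= e -> - e <= x <= e.
Proof. unfold Rabs; destruct (Rcase_abs x); lra. Qed.

Lemma prodL_ext {A} (f g : A -> R) l : (forall a, In a l -> f a = g a) -> prodL f l = prodL g l.
Proof.
  induction l; intros H; simpl; auto. unfold prodL in *; simpl.
  rewrite (H a) by (left; auto). rewrite IHl; auto. intros; apply H; right; auto.
Qed.

Lemma prodL_nonneg {A} (f : A -> R) l : (forall a, In a l -> 0 <= f a) -> 0 <= prodL f l.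
Proof.
  induction l; intros H; simpl; [lra|]. unfold prodL in *; simpl.
  apply Rmult_le_pos. apply H; left; auto. apply IHl; intros; apply H; right; auto.
Qed.

Lemma prodL_pos {A} (f : A -> R) l : (forall a, In a l -> 0 < f a) -> 0 < prodL f l.
Proof.
  induction l; intros H; simpl; [lra|]. unfold prodL in *; simpl.
  apply Rmult_lt_0_compat. apply H; left; auto. apply IHl; intros; apply H; right; auto.
Qed.

Lemma prodL_le {A} (f g : A -> R) l :
  (forall a, In a l -> 0 <= f a <= g a) -> prodL f l <= prodL g l.
Proof.
  induction l; intros H; simpl; [lra|]. unfold prodL in *; simpl.
  assert (Ha : 0 <= f a <= g a) by (apply H; left; auto).
  assert (0 <= prodL f l) by (apply prodL_nonneg; intros; apply H; right; auto).
  assert (prodL f l <= prodL g l) by (apply IHl; intros; apply H; right; auto).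
  unfold prodL in *. apply Rmult_le_compat; lra.
Qed.

Lemma prodL_pos_each {A} (f : A -> R) l :
  (forall a, In a l -> 0 <= f a) -> 0 < prodL f l -> forall a, In a l -> 0 < f a.
Proof.
  induction l; intros H Hp b Hb; simpl in Hb; [contradiction|].
  unfold prodL in Hp; simpl in Hp. fold (prodL f l) in Hp.
  assert (0 <= f a) by (apply H; left; auto).
  assert (0 <= prodL f l) by (apply prodL_nonneg; intros; apply H; right; auto).
  destruct Hb as [<-|Hb].
  - destruct (Req_dec (f a) 0) as [E|E]; [rewrite E in Hp; lra|lra].
  - apply IHl; auto. intros; apply H; right; auto.
    destruct (Req_dec (prodL f l) 0) as [E|E]; [rewrite E in Hp; lra|lra].
Qed.

Lemma prodL_mult {A} (f g : A -> R) l : prodL (fun a => f a * g a) l = prodL f l * prodL g l.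
Proof. induction l; simpl; [lra|]. unfold prodL in *; simpl in *. rewrite IHl; lra. Qed.

Lemma prodL_inv {A} (f : A -> R) l :
  (forall a, In a l -> f a <> 0) -> prodL (fun a => / f a) l = / prodL f l.
Proof.
  induction l; intros H; simpl. unfold prodL; simpl; lra. unfold prodL in *; simpl in *.
  rewrite IHl, Rinv_mult; auto.
Qed.

Lemma prodL_split {A} (f : A -> R) v l :
  prodL f l = prodL f (filter v l) * prodL f (filter (fun a => negb (v a)) l).
Proof.
  induction l; simpl. unfold prodL; simpl; lra.
  destruct (v a); simpl; unfold prodL in *; simpl; rewrite IHl; lra.
Qed.

Lemma ln_prodL {A} (f : A -> R) l :
  (forall a, In a l -> 0 < f a) -> ln (prodL f l) = sumL (fun a => ln (f a)) l.
Proof.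
  induction l; intros H; simpl. apply ln_1. unfold prodL, sumL in *; simpl.
  rewrite ln_mult, IHl; auto. intros; apply H; right; auto. apply H; left; auto.
  apply prodL_pos; intros; apply H; right; auto.
Qed.

(** * The inequality ln x <= x - 1 and its consequences *)

Lemma ln_le_mono x y : 0 < x -> x <= y -> ln x <= ln y.
Proof.
  intros Hx Hxy. destruct (Req_dec x y) as [E|E]; [rewrite E; lra|].
  left. apply ln_increasing; lra.
Qed.

Lemma ln_le_xm1 x : 0 < x -> ln x <= x - 1.
Proof. intros Hx. pose proof (exp_ineq1_le (ln x)). rewrite exp_ln in H; lra. Qed.

Lemma ln_eq_xm1 x : 0 < x -> ln x = x - 1 -> x = 1.
Proof.
  intros Hx E. destruct (Req_dec (ln x) 0) as [Z|Z]. lra.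
  pose proof (exp_ineq1 (ln x) Z). rewrite exp_ln in H; lra.
Qed.

(* If prod y <= 1 then sum 1/y >= n (apply ln(1/y) <= 1/y - 1 termwise). *)
Lemma prod_le1_suminv {A} (y : A -> R) l :
  (forall a, In a l -> 0 < y a) -> prodL y l <= 1 -> INR (length l) <= sumL (fun a => / y a) l.
Proof.
  intros Hp H1.
  assert (Hs : sumL (fun a => ln (y a)) l <= 0).
  { rewrite <- ln_prodL, <- ln_1 by auto. apply ln_le_mono; auto. apply prodL_pos; auto. }
  assert (sumL (fun a => 1 - ln (y a)) l <= sumL (fun a => / y a) l).
  { apply sumL_le. intros a Ha. pose proof (Hp a Ha).
    pose proof (ln_le_xm1 (/ y a) (Rinv_0_lt_compat _ H)). rewrite ln_Rinv in H0 by auto. lra. }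
  rewrite sumL_minus, sumL_const in H. lra.
Qed.

Lemma ln_sum_equality {A} (x : A -> R) l :
  (forall a, In a l -> 0 < x a) -> 0 <= sumL (fun a => ln (x a)) l ->
  sumL (fun a => x a - 1) l <= 0 -> forall a, In a l -> x a = 1.
Proof.
  intros Hx Hlog Hsx a Ha.
  assert (Hgap : forall b, In b l -> 0 <= (x b - 1) - ln (x b))
    by (intros b Hb; pose proof (ln_le_xm1 _ (Hx b Hb)); lra).
  assert (Hsum : sumL (fun b => (x b - 1) - ln (x b)) l = 0).
  { pose proof (sumL_nonneg _ l Hgap).
    rewrite (sumL_minus (fun b => x b - 1) (fun b => ln (x b))) in *. lra. }
  pose proof (sumL_zero_each _ l Hgap Hsum a Ha). apply ln_eq_xm1; auto; lra.
Qed.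

Definition indc (P : obs -> bool) (o : obs) : R := if P o then 1 else 0.

Definition cnt (P : obs -> bool) (d : list obs) : R := sumL (indc P) d.

Lemma cnt_cons P o d : cnt P (o :: d) = indc P o + cnt P d.
Proof. reflexivity. Qed.

Lemma cnt_nonneg P d : 0 <= cnt P d.
Proof. apply sumL_nonneg. intros o _. unfold indc; destruct (P o); lra. Qed.

Lemma cnt_ge1 P d o : In o d -> P o = true -> 1 <= cnt P d.
Proof.
  intros Ho HP. assert (E : indc P o = 1) by (unfold indc; rewrite HP; reflexivity).
  rewrite <- E. apply sumL_single; auto. intros a _; unfold indc; destruct (P a); lra.
Qed.

Lemma cnt_pos_ex P d : 0 < cnt P d -> exists o, In o d /\ P o = true.
Proof.
  induction d as [|a d IH]; intros H. unfold cnt, sumL in H; simpl in H; lra.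
  rewrite cnt_cons in H. unfold indc in H. destruct (P a) eqn:E.
  - exists a; split; [left|]; auto.
  - destruct IH as [o [Ho HP]]; [lra|]. exists o; split; [right|]; auto.
Qed.

Lemma cnt_len P d : INR (length (filter P d)) = cnt P d.
Proof.
  induction d as [|a d IH]; [reflexivity|]. rewrite cnt_cons. unfold indc. cbn [filter].
  destruct (P a); cbn [length]; [rewrite S_INR|]; lra.
Qed.

Lemma cnt_filter P v d : cnt P (filter v d) = cnt (fun o => P o && v o) d.
Proof.
  induction d as [|a d IH]; [reflexivity|]. cbn [filter]. rewrite (cnt_cons _ a d).
  unfold indc at 1. destruct (v a); rewrite ?cnt_cons, IH; unfold indc; destruct (P a); simpl; lra.
Qed.

Lemma cnt_all d : cnt (fun _ => true) d = INR (length d).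
Proof.
  induction d as [|a d IHd]; [reflexivity|]. rewrite cnt_cons, IHd.
  change (length (a :: d)) with (S (length d)). rewrite S_INR. unfold indc; lra.
Qed.

Lemma cnt_le_len P d : cnt P d <= INR (length d).
Proof. rewrite <- cnt_all. apply sumL_le. intros o _; unfold indc; destruct (P o); lra. Qed.

Lemma cnt_map P f d : cnt P (map f d) = cnt (fun o => P (f o)) d.
Proof. unfold cnt. rewrite sumL_map. reflexivity. Qed.

Lemma cnt_ext P P' d : (forall o, In o d -> P o = P' o) -> cnt P d = cnt P' d.
Proof. intros H. apply sumL_ext. intros o Ho. unfold indc. rewrite H; auto. Qed.

Lemma ind_sum (f : nat -> R) x a m : (a <= x < a + m)%nat ->
  sumL (fun k => (if Nat.eqb x k then 1 else 0) * f k) (seq a m) = f x.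
Proof.
  revert a. induction m; intros a H; [lia|]. cbn [seq]. unfold sumL; cbn [fold_right].
  fold (sumL (fun k => (if Nat.eqb x k then 1 else 0) * f k) (seq (S a) m)).
  destruct (Nat.eqb_spec x a).
  - subst. rewrite (sumL_ext _ (fun _ => 0)), sumL_zero. lra.
    intros k Hk. apply in_seq in Hk. destruct (Nat.eqb_spec a k); [lia|lra].
  - rewrite IHm by lia. lra.
Qed.

Lemma ind_le1 x a m : sumL (fun k => if Nat.eqb k x then 1 else 0) (seq a m) <= 1.
Proof.
  destruct (classic (a <= x < a + m)%nat) as [Hx|Hx].
  - pose proof (ind_sum (fun _ => 1) x a m Hx).
    rewrite (sumL_ext _ (fun k => (if Nat.eqb x k then 1 else 0) * 1)); [lra|].
    intros k _. rewrite Nat.eqb_sym. ring.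
  - rewrite (sumL_ext _ (fun _ => 0)), sumL_zero; [lra|].
    intros k Hk. apply in_seq in Hk. destruct (Nat.eqb_spec k x); [lia|auto].
Qed.

Lemma regroup K (f : nat -> R) (d : list obs) : (forall o, In o d -> (snd o <= K)%nat) ->
  sumL (fun o : obs => f (snd o)) d =
  sumL (fun k => cnt (fun o : obs => Nat.eqb (snd o) k) d * f k) (seq 0 (S K)).
Proof.
  intros H. unfold cnt.
  rewrite (sumL_ext (fun k => sumL _ d * f k)
             (fun k => sumL (fun o : obs => (if Nat.eqb (snd o) k then 1 else 0) * f k) d)).
  2:{ intros. rewrite Rmult_comm, <- sumL_scal. apply sumL_ext. intros; unfold indc; lra. }
  rewrite <- (sumL_swap (fun (o : obs) (k : nat) => (if Nat.eqb (snd o) k then 1 else 0) * f k)).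
  apply sumL_ext. intros o Ho. rewrite ind_sum; auto. pose proof (H o Ho). lia.
Qed.

Lemma regroup_cnt K (v : obs -> bool) (d : list obs) : (forall o, In o d -> (snd o <= K)%nat) ->
  sumL (fun k => cnt (fun o : obs => Nat.eqb (snd o) k && v o) d) (seq 0 (S K)) = cnt v d.
Proof.
  intros H. unfold cnt.
  rewrite <- (sumL_swap (fun (o : obs) (k : nat) => indc (fun o => Nat.eqb (snd o) k && v o) o)).
  apply sumL_ext. intros o Ho.
  rewrite (sumL_ext _ (fun k => (if Nat.eqb (snd o) k then 1 else 0) * indc v o)).
  - rewrite ind_sum; auto. pose proof (H o Ho); lia.
  - intros k _. unfold indc. destruct (Nat.eqb (snd o) k), (v o); simpl; lra.
Qed.

Lemma Fplus_sumL K F s : Fplus K F s = sumL (fun k => F k s) (seq 0 K).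
Proof. apply (fold_sumL (fun k => F k s)). Qed.

Lemma Fext_lt K F k s : (k < K)%nat -> Fext K F k s = F k s.
Proof. intros H. unfold Fext. destruct (Nat.ltb_spec k K); [auto|lia]. Qed.

Lemma Fext_ge K F k s : (K <= k)%nat -> Fext K F k s = 1 - Fplus K F s.
Proof. intros H. unfold Fext. destruct (Nat.ltb_spec k K); [lia|auto]. Qed.

Lemma Fext_sum K F s : sumL (fun k => Fext K F k s) (seq 0 (S K)) = 1.
Proof.
  rewrite sumL_seq_last, Fext_ge, Fplus_sumL by lia.
  rewrite (sumL_ext _ (fun k => F k s)); [ring|].
  intros a Ha. apply in_seq in Ha. apply Fext_lt; lia.
Qed.

Lemma Fext_ext K F G k x :
  (forall j, (j < K)%nat -> F j x = G j x) -> Fext K F k x = Fext K G k x.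
Proof.
  intros H. destruct (Nat.lt_ge_cases k K).
  - rewrite !Fext_lt by auto. auto.
  - rewrite !Fext_ge, !Fplus_sumL by auto. rewrite (sumL_ext _ (fun j => G j x)); auto.
    intros j Hj; apply in_seq in Hj; apply H; lia.
Qed.

Lemma Fext1_0 F x : Fext 1 F 0 x = F 0%nat x.
Proof. reflexivity. Qed.

Lemma Fext1_1 F x : Fext 1 F 1 x = 1 - F 0%nat x.
Proof. unfold Fext, Fplus. simpl. ring. Qed.

Lemma Fext_nonneg K c w F k x : inFK K c w F -> inS c w x -> 0 <= Fext K F k x.
Proof.
  intros HF Hx. destruct (Nat.lt_ge_cases k K).
  - rewrite Fext_lt by auto. destruct HF as [H1 _]. apply H1; auto.
  - rewrite Fext_ge by auto. destruct HF as [_ [_ H3]]. pose proof (H3 x Hx). lra.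
Qed.

Lemma Fext_le1 K c w F k x : inFK K c w F -> inS c w x -> Fext K F k x <= 1.
Proof.
  intros HF Hx. rewrite <- (Fext_sum K F x).
  assert (E : Fext K F k x = Fext K F (Nat.min k K) x).
  { destruct (Nat.lt_ge_cases k K).
    - rewrite Nat.min_l by lia. reflexivity.
    - rewrite Nat.min_r, !Fext_ge by lia. reflexivity. }
  rewrite E. apply (sumL_single (fun k => Fext K F k x)).
  - intros a _. apply (Fext_nonneg K c w); auto.
  - apply in_seq; lia.
Qed.

Lemma two_terms K c w F j k x : inFK K c w F -> inS c w x -> (j <= K)%nat -> (k <= K)%nat ->
  j <> k -> Fext K F j x + Fext K F k x <= 1.
Proof.
  intros HF Hx Hj Hk Hjk. rewrite <- (Fext_sum K F x).
  set (h := fun l => Fext K F l x).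
  assert (Hh : forall l, 0 <= h l) by (intros; apply (Fext_nonneg K c w); auto).
  rewrite (sumL_ext (fun l => Fext K F l x)
             (fun l => (if Nat.eqb l k then h l else 0) + (if Nat.eqb l k then 0 else h l)))
    by (intros l _; destruct (Nat.eqb l k); unfold h; ring).
  rewrite sumL_plus.
  assert (h k <= sumL (fun l => if Nat.eqb l k then h l else 0) (seq 0 (S K))).
  { pose proof (sumL_single (fun l => if Nat.eqb l k then h l else 0) (seq 0 (S K)) k) as E.
    cbv beta in E. rewrite Nat.eqb_refl in E.
    apply E. intros l _. destruct (Nat.eqb l k); auto; lra. apply in_seq; lia. }
  assert (h j <= sumL (fun l => if Nat.eqb l k then 0 else h l) (seq 0 (S K))).
  { pose proof (sumL_single (fun l => if Nat.eqb l k then 0 else h l) (seq 0 (S K)) j) as E.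
    cbv beta in E. destruct (Nat.eqb_spec j k); [lia|].
    apply E. intros l _. destruct (Nat.eqb l k); auto; lra. apply in_seq; lia. }
  unfold h in *. lra.
Qed.

Lemma valid_F0_inFK K F0 c w : valid_F0 K F0 -> inFK K c w F0.
Proof.
  intros [Hm [_ [Hl [Lim [HL HS]]]]].
  assert (Hnn : forall k, (k < K)%nat -> forall t, 0 <= F0 k t).
  { intros k Hk t. apply Rnot_lt_le. intros Hneg. destruct (Hl k Hk (- F0 k t)) as [M HM]; [lra|].
    pose proof (HM (Rmin M t) (Rmin_l _ _)). pose proof (Hm k Hk (Rmin M t) t (Rmin_r _ _)).
    unfold Rabs in H; destruct (Rcase_abs _); lra. }
  assert (Hub : forall k, (k < K)%nat -> forall t, F0 k t <= Lim k).
  { intros k Hk t. apply Rnot_lt_le. intros Hgt. destruct (HL k Hk (F0 k t - Lim k)) as [M HM]; [lra|].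
    pose proof (HM (Rmax M t) (Rmax_l _ _)). pose proof (Hm k Hk t (Rmax M t) (Rmax_r _ _)).
    unfold Rabs in H; destruct (Rcase_abs _); lra. }
  split; [|split].
  - intros; apply Hnn; auto.
  - intros; apply Hm; auto.
  - intros s _. rewrite Fplus_sumL. rewrite fold_sumL in HS. rewrite <- HS. apply sumL_le.
    intros k Hk; apply in_seq in Hk; apply Hub; lia.
Qed.

Definition avgF (F G : nat -> R -> R) : nat -> R -> R := fun k x => (F k x + G k x) / 2.

Lemma Fext_avg K F G k x : Fext K (avgF F G) k x = (Fext K F k x + Fext K G k x) / 2.
Proof.
  destruct (Nat.lt_ge_cases k K).
  - rewrite !Fext_lt by auto. reflexivity.
  - rewrite !Fext_ge, !Fplus_sumL by auto. unfold avgF.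
    rewrite (sumL_ext _ (fun k => /2 * (F k x + G k x))), sumL_scal, sumL_plus by (intros; lra). lra.
Qed.

Lemma inFK_avg K c w F G : inFK K c w F -> inFK K c w G -> inFK K c w (avgF F G).
Proof.
  intros [F1 [F2 F3]] [G1 [G2 G3]]. split; [|split].
  - intros k Hk s Hs. pose proof (F1 k Hk s Hs). pose proof (G1 k Hk s Hs). unfold avgF; lra.
  - intros k Hk s t Hs Ht Hst. pose proof (F2 k Hk s t Hs Ht Hst). pose proof (G2 k Hk s t Hs Ht Hst).
    unfold avgF; lra.
  - intros s Hs. pose proof (F3 s Hs). pose proof (G3 s Hs).
    pose proof (Fext_avg K F G K s) as E. rewrite !Fext_ge in E by lia. lra.
Qed.

Lemma valid_data_inS K c w d o : valid_data K w d -> In o d -> inS c w (c (fst o)).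
Proof.
  intros Hv Ho. unfold valid_data in Hv; rewrite Forall_forall in Hv.
  destruct (Hv o Ho). exists (fst o); auto.
Qed.

Lemma valid_labels K w d : valid_data K w d -> forall o, In o d -> (snd o <= K)%nat.
Proof. intros Hv o Ho. unfold valid_data in Hv; rewrite Forall_forall in Hv. apply (Hv o Ho). Qed.

Lemma lik_prodL K c d F : lik K c d F = prodL (fun o : obs => Fext K F (snd o) (c (fst o))) d.
Proof. unfold lik, prodL. induction d; simpl; auto. rewrite IHd; auto. Qed.

(** * The basic inequality for a maximum likelihood estimator *)

(* Comparing the MLE F with the midpoint (F+G)/2, which is admissible, gives
   sum_j 2 G_j / (G_j + F_j) <= n for every admissible G positive on the data
   (G_j, F_j being the likelihood factors of observation j). *)
Lemma mle_basic K c w d F G :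
  valid_data K w d -> isMLE K c w d F -> inFK K c w G ->
  (forall o, In o d -> 0 < Fext K G (snd o) (c (fst o))) ->
  sumL (fun o : obs => 2 * Fext K G (snd o) (c (fst o)) /
                         (Fext K G (snd o) (c (fst o)) + Fext K F (snd o) (c (fst o)))) d
    <= INR (length d).
Proof.
  intros Hv [HF Hmax] HG Hpos.
  set (A := fun o : obs => Fext K G (snd o) (c (fst o))).
  set (B := fun o : obs => Fext K F (snd o) (c (fst o))).
  assert (HB0 : forall o, In o d -> 0 <= B o)
    by (intros; apply (Fext_nonneg K c w); auto; eapply valid_data_inS; eauto).
  assert (HBp : forall o, In o d -> 0 < B o).
  { assert (0 < lik K c d G) by (rewrite lik_prodL; apply prodL_pos; auto).
    pose proof (Hmax G HG). apply prodL_pos_each; auto. unfold B; rewrite <- lik_prodL. lra. }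
  assert (Havg := Hmax _ (inFK_avg _ _ _ _ _ HF HG)). rewrite !lik_prodL in Havg.
  assert (Hy : prodL (fun o : obs => (A o + B o) / (2 * B o)) d <= 1).
  { rewrite (prodL_ext _ (fun o : obs => Fext K (avgF F G) (snd o) (c (fst o)) * / B o)).
    - rewrite prodL_mult, prodL_inv by (intros o Ho; pose proof (HBp o Ho); lra).
      assert (0 < prodL B d) by (apply prodL_pos; auto).
      apply (Rmult_le_reg_r (prodL B d)); auto. rewrite Rmult_assoc, Rinv_l by lra.
      unfold B in *. lra.
    - intros o Ho. rewrite Fext_avg. fold (A o) (B o). pose proof (HBp o Ho). field. lra. }
  assert (Hs := prod_le1_suminv _ _
    (fun o Ho => Rdiv_lt_0_compat _ _ (Rplus_lt_le_0_compat _ _ (Hpos o Ho) (HB0 o Ho))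
                   (Rmult_lt_0_compat 2 _ Rlt_0_2 (HBp o Ho))) Hy).
  rewrite (sumL_ext _ (fun o : obs => 2 - 2 * B o / (A o + B o))).
  - rewrite (sumL_ext _ (fun o : obs => 2 * B o / (A o + B o))) in Hs.
    + rewrite sumL_minus, sumL_const. lra.
    + intros o Ho. pose proof (HBp o Ho). pose proof (Hpos o Ho). unfold A, B in *. field. lra.
  - intros o Ho. pose proof (HBp o Ho). pose proof (Hpos o Ho). unfold A, B in *. field. lra.
Qed.

(** * Hellinger-type consistency at heavy atoms *)

Definition hratio (a b : R) : R := 2 * a / (a + b).

Lemma hratio_bounds a b : 0 <= a <= 1 -> 0 <= b <= 1 -> 0 <= hratio a b <= 2.
Proof.
  intros Ha Hb. unfold hratio. destruct (Req_dec (a + b) 0) as [E|E].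
  - rewrite E. unfold Rdiv. rewrite Rinv_0. lra.
  - split. apply Rmult_le_pos; [lra|left; apply Rinv_0_lt_compat; lra].
    apply (Rmult_le_reg_r (a + b)); [lra|]. unfold Rdiv. rewrite Rmult_assoc, Rinv_l by lra. lra.
Qed.

Lemma hratio_term a b : 0 <= a <= 1 -> 0 <= b <= 1 ->
  a + (a - b) / 2 + (a - b)^2 / 4 <= a * hratio a b.
Proof.
  intros Ha Hb. unfold hratio. destruct (Req_dec (a + b) 0) as [E|E].
  - assert (a = 0) by lra. assert (b = 0) by lra. subst. rewrite E. unfold Rdiv. rewrite Rinv_0. lra.
  - replace (a * (2 * a / (a + b))) with (a + (a - b) / 2 + (a - b)^2 / (2 * (a + b)))
      by (field; lra).
    assert ((a - b)^2 / 4 <= (a - b)^2 / (2 * (a + b))).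
    { unfold Rdiv. apply Rmult_le_compat_l. apply pow2_ge_0. apply Rinv_le_contravar; lra. }
    lra.
Qed.

Lemma hellinger_row (a b : nat -> R) Lc :
  (forall l, (l < Lc)%nat -> 0 <= a l <= 1 /\ 0 <= b l <= 1) ->
  sumL a (seq 0 Lc) = 1 -> sumL b (seq 0 Lc) = 1 ->
  1 + sumL (fun l => (a l - b l)^2 / 4) (seq 0 Lc) <= sumL (fun l => a l * hratio (a l) (b l)) (seq 0 Lc).
Proof.
  intros Hab Ha1 Hb1.
  apply Rle_trans with (sumL (fun l => a l + (a l - b l) / 2 + (a l - b l)^2 / 4) (seq 0 Lc)).
  - rewrite !sumL_plus.
    rewrite (sumL_ext (fun l => (a l - b l) / 2) (fun l => /2 * (a l - b l))) by (intros; lra).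
    rewrite sumL_scal, sumL_minus. fold (sumL a (seq 0 Lc)). rewrite Ha1, Hb1. lra.
  - apply sumL_le. intros l Hl; apply in_seq in Hl. destruct (Hab l ltac:(lia)).
    apply hratio_term; auto.
Qed.

Section HellingerConsistency.
(* Observations d carry weights g >= 0 with sum g <= n = |d|.  Cells P i l
   (rows i < M0 of mass w i, columns l < Lc) are disjoint; on cell (i,l) the
   weight is hratio (a i l) (b i l) for probability vectors a i, b i, and the
   cell is observed at least n (w i a i l - dl) times.  Then a i and b i are
   close on every heavy row. *)
Variables (d : list obs) (g : obs -> R) (M0 Lc : nat) (P : nat -> nat -> obs -> bool)
  (a b : nat -> nat -> R) (w : nat -> R) (dl : R).
Hypothesis Hg0 : forall o, In o d -> 0 <= g o.
Hypothesis Hgs : sumL g d <= INR (length d).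
Hypothesis Hone : forall o,
  sumL (fun i => sumL (fun l => indc (P i l) o) (seq 0 Lc)) (seq 0 M0) <= 1.
Hypothesis HgP : forall o i l, In o d -> (i < M0)%nat -> (l < Lc)%nat -> P i l o = true ->
  g o = hratio (a i l) (b i l).
Hypothesis Hab : forall i l, (i < M0)%nat -> (l < Lc)%nat -> 0 <= a i l <= 1 /\ 0 <= b i l <= 1.
Hypothesis Hsum : forall i, (i < M0)%nat -> sumL (a i) (seq 0 Lc) = 1 /\ sumL (b i) (seq 0 Lc) = 1.
Hypothesis Hcnt : forall i l, (i < M0)%nat -> (l < Lc)%nat ->
  INR (length d) * (w i * a i l - dl) <= cnt (P i l) d.
Hypothesis Hdl : 0 <= dl.
Hypothesis Hw : forall i, 0 <= w i.
Hypothesis Hn : (0 < length d)%nat.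

Let G i l := hratio (a i l) (b i l).

Let HG i l : (i < M0)%nat -> (l < Lc)%nat -> 0 <= G i l <= 2.
Proof. intros Hi Hl. destruct (Hab i l Hi Hl). apply hratio_bounds; auto. Qed.

Lemma cell_weight_le :
  sumL (fun i => sumL (fun l => G i l * cnt (P i l) d) (seq 0 Lc)) (seq 0 M0) <= INR (length d).
Proof.
  eapply Rle_trans; [|apply Hgs].
  apply Rle_trans with
    (sumL (fun o => sumL (fun i => sumL (fun l => indc (P i l) o * g o) (seq 0 Lc)) (seq 0 M0)) d).
  - rewrite (sumL_swap (fun o i => sumL (fun l => indc (P i l) o * g o) (seq 0 Lc)) d (seq 0 M0)).
    apply sumL_le. intros i Hi. apply in_seq in Hi.
    rewrite (sumL_swap (fun o l => indc (P i l) o * g o) d (seq 0 Lc)).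
    apply sumL_le. intros l Hl. apply in_seq in Hl.
    unfold cnt. rewrite <- sumL_scal. right. apply sumL_ext. intros o Ho.
    unfold indc. destruct (P i l o) eqn:E; [rewrite (HgP o i l Ho) by (auto; lia); unfold G|]; lra.
  - apply sumL_le. intros o Ho.
    rewrite (sumL_ext _ (fun i => g o * sumL (fun l => indc (P i l) o) (seq 0 Lc))).
    + rewrite sumL_scal. pose proof (Hone o). pose proof (Hg0 o Ho).
      replace (g o) with (g o * 1) at 2 by lra. apply Rmult_le_compat_l; auto.
    + intros i _. rewrite <- sumL_scal. apply sumL_ext. intros; lra.
Qed.

Lemma expected_weight_le :
  sumL (fun i => sumL (fun l => w i * a i l * G i l) (seq 0 Lc)) (seq 0 M0)
    <= 1 + 2 * dl * INR M0 * INR Lc.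
Proof.
  assert (Hnp : 0 < INR (length d)) by (apply lt_0_INR; auto).
  assert (S2 : sumL (fun i => sumL (fun l => w i * a i l * G i l - dl * G i l) (seq 0 Lc)) (seq 0 M0) <= 1).
  { apply (Rmult_le_reg_l (INR (length d))); auto. rewrite Rmult_1_r.
    eapply Rle_trans; [|apply cell_weight_le]. rewrite <- sumL_scal. apply sumL_le.
    intros i Hi; apply in_seq in Hi. rewrite <- sumL_scal. apply sumL_le. intros l Hl; apply in_seq in Hl.
    pose proof (Hcnt i l ltac:(lia) ltac:(lia)). pose proof (HG i l ltac:(lia) ltac:(lia)).
    replace (INR (length d) * (w i * a i l * G i l - dl * G i l))
      with (G i l * (INR (length d) * (w i * a i l - dl))) by ring.
    apply Rmult_le_compat_l; lra. }
  assert (sumL (fun i => sumL (fun l => dl * G i l) (seq 0 Lc)) (seq 0 M0) <= 2 * dl * INR M0 * INR Lc).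
  { apply Rle_trans with (sumL (fun i => sumL (fun l => 2 * dl) (seq 0 Lc)) (seq 0 M0)).
    - apply sumL_le. intros i Hi; apply in_seq in Hi. apply sumL_le. intros l Hl; apply in_seq in Hl.
      pose proof (HG i l ltac:(lia) ltac:(lia)). nra.
    - right. rewrite (sumL_ext _ (fun _ => 2 * dl * INR Lc)), sumL_const, length_seq; [ring|].
      intros; rewrite sumL_const, length_seq; ring. }
  rewrite (sumL_ext _ (fun i => sumL (fun l => w i * a i l * G i l) (seq 0 Lc)
                             - sumL (fun l => dl * G i l) (seq 0 Lc))) in S2
    by (intros; apply sumL_minus).
  rewrite sumL_minus in S2. lra.
Qed.

Lemma hellinger_consistency i0 l0 : (i0 < M0)%nat -> (l0 < Lc)%nat ->
  w i0 * (a i0 l0 - b i0 l0)^2 / 4 <= (1 - sumL w (seq 0 M0)) + 2 * dl * INR M0 * INR Lc.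
Proof.
  intros Hi0 Hl0.
  set (D i := sumL (fun l => (a i l - b i l)^2 / 4) (seq 0 Lc)).
  assert (Low : forall i, (i < M0)%nat -> 1 + D i <= sumL (fun l => a i l * G i l) (seq 0 Lc)).
  { intros i Hi. destruct (Hsum i Hi). apply hellinger_row; auto. }
  assert (HD : forall i, 0 <= D i).
  { intros i. apply sumL_nonneg. intros l _. pose proof (pow2_ge_0 (a i l - b i l)). lra. }
  assert (HD0 : (a i0 l0 - b i0 l0)^2 / 4 <= D i0).
  { apply (sumL_single (fun l => (a i0 l - b i0 l)^2 / 4)); [|apply in_seq; lia].
    intros l _. pose proof (pow2_ge_0 (a i0 l - b i0 l)). lra. }
  assert (Hrow : w i0 * D i0 <=
                 sumL (fun i => w i * (sumL (fun l => a i l * G i l) (seq 0 Lc) - 1)) (seq 0 M0)).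
  { apply Rle_trans with (w i0 * (sumL (fun l => a i0 l * G i0 l) (seq 0 Lc) - 1)).
    - apply Rmult_le_compat_l; auto. pose proof (Low i0 Hi0). lra.
    - apply (sumL_single (fun i => w i * (sumL (fun l => a i l * G i l) (seq 0 Lc) - 1)));
        [|apply in_seq; lia].
      intros i Hi; apply in_seq in Hi. apply Rmult_le_pos; auto.
      pose proof (Low i ltac:(lia)). pose proof (HD i). lra. }
  assert (E : sumL (fun i => w i * (sumL (fun l => a i l * G i l) (seq 0 Lc) - 1)) (seq 0 M0)
              = sumL (fun i => sumL (fun l => w i * a i l * G i l) (seq 0 Lc)) (seq 0 M0)
                - sumL w (seq 0 M0)).
  { rewrite <- sumL_minus. apply sumL_ext. intros i _.
    rewrite (sumL_ext (fun l => w i * a i l * G i l) (fun l => w i * (a i l * G i l))), sumL_scal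
      by (intros; ring). ring. }
  pose proof expected_weight_le. pose proof (Hw i0).
  assert (w i0 * ((a i0 l0 - b i0 l0)^2 / 4) <= w i0 * D i0) by (apply Rmult_le_compat_l; auto).
  unfold Rdiv in *. lra.
Qed.

End HellingerConsistency.

Definition posb (x : R) : bool := if Rlt_dec 0 x then true else false.

Definition Icell (i l : nat) (o : obs) : bool := Nat.eqb i (fst o) && Nat.eqb l (snd o).

(* The extended tuple at atom c i, as a probability vector on labels 0..K.
   Atoms of zero weight (possibly outside S) get a point mass, so that every
   row is a probability vector. *)
Definition atom_row K (F : nat -> R -> R) (c w : nat -> R) (i l : nat) : R :=
  if posb (w i) then Fext K F l (c i) else if Nat.eqb l 0 then 1 else 0.

Lemma atom_row_bounds K F c w i l : inFK K c w F -> 0 <= atom_row K F c w i l <= 1.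
Proof.
  intros HF. unfold atom_row, posb. destruct (Rlt_dec 0 (w i)) as [Hw|Hw].
  - assert (inS c w (c i)) by (exists i; auto).
    split; [apply (Fext_nonneg K c w)|apply (Fext_le1 K c w)]; auto.
  - destruct (Nat.eqb l 0); lra.
Qed.

Lemma atom_row_sum K F c w i : sumL (atom_row K F c w i) (seq 0 (S K)) = 1.
Proof.
  unfold atom_row. destruct (posb (w i)); [apply Fext_sum|].
  cbn [seq]. unfold sumL; cbn [fold_right Nat.eqb].
  fold (sumL (fun l => if Nat.eqb l 0 then 1 else 0) (seq 1 K)).
  rewrite (sumL_ext _ (fun _ => 0)), sumL_zero; [ring|].
  intros k Hk; apply in_seq in Hk. destruct (Nat.eqb_spec k 0); [lia|auto].
Qed.

Lemma one_cell (w : nat -> R) M0 Lc (o : obs) :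
  sumL (fun i => sumL (fun l => indc (fun o => posb (w i) && Icell i l o) o) (seq 0 Lc)) (seq 0 M0) <= 1.
Proof.
  eapply Rle_trans; [|apply (ind_le1 (fst o) 0 M0)]. apply sumL_le. intros i _. unfold indc, Icell.
  destruct (Nat.eqb_spec i (fst o)).
  - eapply Rle_trans; [|apply (ind_le1 (snd o) 0 Lc)].
    apply sumL_le. intros l _. destruct (posb (w i)); simpl; [|destruct (Nat.eqb l (snd o)); lra].
    subst. rewrite ?Nat.eqb_refl. simpl. lra.
  - rewrite (sumL_ext _ (fun _ => 0)), sumL_zero; [right; reflexivity|].
    intros l _. destruct (posb (w i)); reflexivity.
Qed.

Lemma mle_close_at_atom K c w d F G M0 dl eta i0 :
  valid_data K w d -> isMLE K c w d F -> inFK K c w G ->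
  (forall o, In o d -> 0 < Fext K G (snd o) (c (fst o))) ->
  (0 < length d)%nat -> 0 <= dl -> (forall i, 0 <= w i) ->
  (forall i l, (i < M0)%nat -> (l <= K)%nat -> 0 < w i ->
      INR (length d) * (w i * Fext K G l (c i) - dl) <= cnt (Icell i l) d) ->
  (1 - sumL w (seq 0 M0)) + 2 * dl * INR M0 * INR (S K) < w i0 * eta^2 / 4 ->
  (i0 < M0)%nat -> 0 < w i0 -> 0 < eta ->
  forall l, (l <= K)%nat -> Rabs (Fext K G l (c i0) - Fext K F l (c i0)) < eta.
Proof.
  intros Hv HM HG Hpos Hn Hdl Hw Hcnt Hc Hi0 Hw0 Heta l Hl.
  pose proof (mle_basic K c w d F G Hv HM HG Hpos) as Hb.
  assert (HF := proj1 HM).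
  assert (Hpi : forall i, posb (w i) = true -> 0 < w i)
    by (intros i; unfold posb; destruct (Rlt_dec 0 (w i)); [auto|discriminate]).
  assert (Hres := hellinger_consistency d
    (fun o : obs => hratio (Fext K G (snd o) (c (fst o))) (Fext K F (snd o) (c (fst o))))
    M0 (S K) (fun i l o => posb (w i) && Icell i l o) (atom_row K G c w) (atom_row K F c w) w dl).
  assert (Hpos0 : posb (w i0) = true) by (unfold posb; destruct (Rlt_dec 0 (w i0)); auto; lra).
  assert (Hsq : w i0 * (atom_row K G c w i0 l - atom_row K F c w i0 l)^2 / 4
                < w i0 * eta^2 / 4).
  { eapply Rle_lt_trans; [|apply Hc]. apply Hres; auto; try lia.
    - intros o Ho. apply hratio_bounds.
      + split; [apply Rlt_le, Hpos|apply (Fext_le1 K c w)]; auto. eapply valid_data_inS; eauto.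
      + split; [apply (Fext_nonneg K c w)|apply (Fext_le1 K c w)]; auto; eapply valid_data_inS; eauto.
    - intros o. apply one_cell.
    - intros o i l' Ho Hi Hl' HP. apply andb_prop in HP. destruct HP as [Hp HI]. unfold Icell in HI.
      apply andb_prop in HI. destruct HI as [E1 E2]. apply Nat.eqb_eq in E1, E2.
      unfold atom_row. rewrite Hp. subst. reflexivity.
    - intros i l' _ _. split; apply atom_row_bounds; auto.
    - intros i _. split; apply atom_row_sum.
    - intros i l' Hi Hl'. unfold atom_row. destruct (posb (w i)) eqn:P.
      + eapply Rle_trans; [apply Hcnt; auto; lia|]. right. apply cnt_ext. reflexivity.
      + rewrite (cnt_ext _ (fun _ => false)) by reflexivity.
        assert (w i = 0)
          by (unfold posb in P; destruct (Rlt_dec 0 (w i)); [discriminate|pose proof (Hw i); lra]).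
        unfold cnt, indc. rewrite sumL_zero. pose proof (pos_INR (length d)). rewrite H. nra. }
  unfold atom_row in Hsq. rewrite Hpos0 in Hsq.
  assert (Hsq2 : (Fext K G l (c i0) - Fext K F l (c i0))^2 < eta^2).
  { apply (Rmult_lt_reg_l (w i0 / 4)). unfold Rdiv; apply Rmult_lt_0_compat; lra. lra. }
  rewrite <- (Rabs_pos_eq eta) by lra. apply Rsqr_lt_abs_0. unfold Rsqr. simpl in Hsq2. lra.
Qed.

(** * Gibbs' inequality *)

Lemma distributions_equal (p q : nat -> R) m :
  sumL p (seq 0 m) = 1 -> sumL q (seq 0 m) = 1 -> (forall k, (k < m)%nat -> q k <= p k) ->
  forall k, (k < m)%nat -> p k = q k.
Proof.
  intros Hp Hq Hle k Hk.
  assert (Hnn : forall j, In j (seq 0 m) -> 0 <= p j - q j)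
    by (intros j Hj; apply in_seq in Hj; pose proof (Hle j ltac:(lia)); lra).
  assert (p k - q k = 0); [|lra].
  apply (sumL_zero_each (fun j => p j - q j) (seq 0 m)); auto.
  rewrite sumL_minus, Hp, Hq; lra. apply in_seq; lia.
Qed.

Definition freq (ds : list obs) (k : nat) : R :=
  cnt (fun o : obs => Nat.eqb (snd o) k) ds / INR (length ds).

Lemma freq_sum K (ds : list obs) : (forall o, In o ds -> (snd o <= K)%nat) -> (0 < length ds)%nat ->
  sumL (freq ds) (seq 0 (S K)) = 1.
Proof.
  intros HK Hn. assert (0 < INR (length ds)) by (apply lt_0_INR; auto). unfold freq.
  rewrite (sumL_ext _ (fun k => / INR (length ds) * cnt (fun o : obs => Nat.eqb (snd o) k && true) ds)).
  - rewrite (sumL_scal (fun k => cnt (fun o : obs => Nat.eqb (snd o) k && true) ds)).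
    rewrite (regroup_cnt K (fun _ => true)), cnt_all by auto. field. lra.
  - intros k _. unfold Rdiv. rewrite Rmult_comm. f_equal. apply cnt_ext. intros; symmetry; apply andb_true_r.
Qed.

Lemma freq_pos (ds : list obs) (o : obs) : In o ds -> 0 < freq ds (snd o).
Proof.
  intros Ho. unfold freq.
  pose proof (cnt_ge1 (fun o' : obs => Nat.eqb (snd o') (snd o)) ds o Ho (Nat.eqb_refl _)).
  assert (0 < INR (length ds)) by (apply lt_0_INR; destruct ds; [contradiction|simpl; lia]).
  apply Rdiv_lt_0_compat; lra.
Qed.

Lemma gibbs K (ds : list obs) (p : nat -> R) :
  (forall o, In o ds -> (snd o <= K)%nat) -> (0 < length ds)%nat ->
  (forall k, (k <= K)%nat -> 0 <= p k) -> sumL p (seq 0 (S K)) = 1 ->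
  prodL (fun o : obs => freq ds (snd o)) ds <= prodL (fun o : obs => p (snd o)) ds ->
  forall k, (k <= K)%nat -> p k = freq ds k.
Proof.
  intros HK Hn Hp0 Hp1 Hle.
  set (n := INR (length ds)). assert (Hnp : 0 < n) by (apply lt_0_INR; auto).
  set (q := freq ds). assert (Hq := freq_pos ds).
  assert (Hpp : forall o, In o ds -> 0 < p (snd o)).
  { apply prodL_pos_each. intros; apply Hp0; auto.
    eapply Rlt_le_trans; [|apply Hle]. apply prodL_pos; auto. }
  set (x := fun o : obs => p (snd o) / q (snd o)).
  assert (Hx : forall o, In o ds -> 0 < x o) by (intros; unfold x; apply Rdiv_lt_0_compat; auto).
  assert (Hlog : 0 <= sumL (fun o : obs => ln (x o)) ds).
  { rewrite <- ln_prodL, <- ln_1 by auto. unfold x.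
    rewrite (prodL_ext _ (fun o : obs => p (snd o) * / q (snd o))) by reflexivity.
    rewrite prodL_mult, prodL_inv by (intros o Ho; pose proof (Hq o Ho); fold q in H; lra).
    assert (0 < prodL (fun o : obs => q (snd o)) ds) by (apply prodL_pos; auto).
    apply ln_le_mono; [lra|]. apply (Rmult_le_reg_r (prodL (fun o : obs => q (snd o)) ds)); auto.
    rewrite Rmult_assoc, Rinv_l by lra. unfold q. lra. }
  assert (Hsx : sumL (fun o : obs => x o - 1) ds <= 0).
  { rewrite sumL_minus, sumL_const. fold n. unfold x.
    rewrite (regroup K (fun k => p k / q k)) by auto.
    apply Rle_trans with (sumL (fun k => n * p k) (seq 0 (S K)) - 1 * n).
    - apply Rplus_le_compat_r. apply sumL_le. intros k Hk. apply in_seq in Hk.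
      unfold q, freq. pose proof (cnt_nonneg (fun o : obs => Nat.eqb (snd o) k) ds).
      pose proof (Hp0 k ltac:(lia)). fold n.
      destruct (Req_dec (cnt (fun o : obs => Nat.eqb (snd o) k) ds) 0) as [E|E].
      + rewrite E. nra.
      + right. field. split; lra.
    - rewrite sumL_scal, Hp1. lra. }
  assert (Heq : forall o, In o ds -> q (snd o) <= p (snd o)).
  { intros o Ho. pose proof (ln_sum_equality x ds Hx Hlog Hsx o Ho). unfold x in H.
    pose proof (Hq o Ho). fold q in H0. apply Req_le.
    apply (Rmult_eq_reg_r (/ q (snd o))); [|apply Rinv_neq_0_compat; lra]. rewrite Rinv_r; lra. }
  intros k Hk. apply (distributions_equal p q (S K)); [auto|apply freq_sum; auto| |lia].
  intros j Hj. destruct (Req_dec (cnt (fun o : obs => Nat.eqb (snd o) j) ds) 0) as [E|E].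
  - unfold q, freq. rewrite E. pose proof (Hp0 j ltac:(lia)). unfold Rdiv; rewrite Rmult_0_l; lra.
  - destruct (cnt_pos_ex (fun o : obs => Nat.eqb (snd o) j) ds) as [o [Ho Hj']].
    { pose proof (cnt_nonneg (fun o : obs => Nat.eqb (snd o) j) ds). lra. }
    apply Nat.eqb_eq in Hj'. rewrite <- Hj'. auto.
Qed.

Definition at_s (c : nat -> R) (s : R) (o : obs) : bool :=
  if Req_EM_T (c (fst o)) s then true else false.
Definition Vcell (c : nat -> R) (s : R) (k : nat) (o : obs) : bool := Nat.eqb (snd o) k && at_s c s o.

Definition simple_est (c : nat -> R) (d : list obs) (s : R) (k : nat) : R :=
  cnt (Vcell c s k) d / cnt (at_s c s) d.

Lemma simple_est_nonneg c d s k : 0 < cnt (at_s c s) d -> 0 <= simple_est c d s k.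
Proof.
  intros HC. unfold simple_est, Rdiv. apply Rmult_le_pos. apply cnt_nonneg.
  left; apply Rinv_0_lt_compat; exact HC.
Qed.

Lemma simple_est_sum K c d s : (forall o, In o d -> (snd o <= K)%nat) -> 0 < cnt (at_s c s) d ->
  sumL (simple_est c d s) (seq 0 (S K)) = 1.
Proof.
  intros HK HC. unfold simple_est.
  rewrite (sumL_ext _ (fun k => / cnt (at_s c s) d * cnt (Vcell c s k) d)) by (intros; unfold Rdiv; ring).
  rewrite sumL_scal. unfold Vcell. rewrite regroup_cnt by auto. apply Rinv_l. lra.
Qed.

Lemma simple_est_freq c d s k : simple_est c d s k = freq (filter (at_s c s) d) k.
Proof. unfold simple_est, freq. rewrite cnt_len, cnt_filter. reflexivity. Qed.

Lemma breve_eq K c w d s k : valid_data K w d -> 0 < cnt (at_s c s) d -> breve K c d k s = simple_est c d s k.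
Proof.
  intros Hv Hc.
  assert (Hn : 0 < INR (length d)) by (pose proof (cnt_le_len (at_s c s) d); lra).
  assert (HN : forall k, Nk c d k s = / INR (length d) * cnt (Vcell c s k) d).
  { intros k'. transitivity (INR (length (filter (Vcell c s k') d)) / INR (length d)); [reflexivity|].
    rewrite cnt_len. unfold Rdiv; ring. }
  assert (HT : Ntot K c d s = / INR (length d) * cnt (at_s c s) d).
  { unfold Ntot. rewrite fold_sumL, (sumL_ext _ _ _ (fun k _ => HN k)), sumL_scal.
    unfold Vcell. rewrite regroup_cnt; auto. eapply valid_labels; eauto. }
  unfold breve. destruct (Req_EM_T (Ntot K c d s) 0) as [E|E].
  - rewrite HT in E. assert (0 < / INR (length d)) by (apply Rinv_0_lt_compat; auto). nra.
  - rewrite HN, HT. unfold simple_est. field. lra.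
Qed.

(** * Local factorisation of the likelihood at s *)

Section Patch.
(* F is admissible and, for every label k < K, either no observation with
   label k is censored at or before s (z k = true), or the values of F_k on S
   below s stay below the simple estimator at s and those above stay above it.
   Then replacing the values at s by the simple estimator (and the forced
   zeros below s by 0) keeps the tuple admissible and does not decrease the
   likelihood factors away from s. *)
Variables (K : nat) (c w : nat -> R) (d : list obs) (F : nat -> R -> R) (s : R) (z : nat -> bool).
Hypothesis Hv : valid_data K w d.
Hypothesis HF : inFK K c w F.
Hypothesis HC : 0 < cnt (at_s c s) d.
Hypothesis Hz : forall k, (k < K)%nat -> z k = true ->
  forall o, In o d -> snd o = k -> s < c (fst o).
Hypothesis Hnz : forall k, (k < K)%nat -> z k = false ->
  (forall x, inS c w x -> x < s -> F k x <= simple_est c d s k) /\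
  (forall x, inS c w x -> s < x -> simple_est c d s k <= F k x).

Definition patch (k : nat) (x : R) : R :=
  if Rlt_dec x s then (if z k then 0 else F k x)
  else if Req_EM_T x s then simple_est c d s k else F k x.

Lemma patch_at_s k : patch k s = simple_est c d s k.
Proof. unfold patch. destruct (Rlt_dec s s); [lra|]. destruct (Req_EM_T s s); [auto|lra]. Qed.

Lemma patch_gt k x : s < x -> patch k x = F k x.
Proof. intros H. unfold patch. destruct (Rlt_dec x s); [lra|]. destruct (Req_EM_T x s); [lra|auto]. Qed.

Lemma patch_lt k x : x < s -> patch k x = if z k then 0 else F k x.
Proof. intros H. unfold patch. destruct (Rlt_dec x s); [auto|lra]. Qed.

Lemma simple_est_forced_zero k : (k < K)%nat -> z k = true -> simple_est c d s k = 0.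
Proof.
  intros Hk Zk. unfold simple_est. rewrite (cnt_ext _ (fun _ => false)).
  - unfold cnt, indc, Rdiv. rewrite sumL_zero. ring.
  - intros o Ho. unfold Vcell, at_s. destruct (Nat.eqb_spec (snd o) k) as [Ek|Ek]; [|reflexivity].
    pose proof (Hz k Hk Zk o Ho Ek). destruct (Req_EM_T (c (fst o)) s); [lra|reflexivity].
Qed.

Lemma patch_below k x : (k < K)%nat -> inS c w x -> x < s -> patch k x <= F k x.
Proof. intros Hk Hx H. rewrite patch_lt by auto. destruct (z k); [apply HF; auto|lra]. Qed.

Lemma patch_Fext_at_s k : (k <= K)%nat -> Fext K patch k s = simple_est c d s k.
Proof.
  intros Hk. destruct (Nat.lt_ge_cases k K).
  - rewrite Fext_lt by auto. apply patch_at_s.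
  - assert (k = K) by lia. subst. rewrite Fext_ge, Fplus_sumL by lia.
    rewrite (sumL_ext _ (simple_est c d s)) by (intros; apply patch_at_s).
    pose proof (simple_est_sum K c d s (valid_labels K w d Hv) HC) as HS.
    rewrite sumL_seq_last in HS. lra.
Qed.

Lemma patch_inFK : inFK K c w patch.
Proof.
  destruct HF as [HF1 [HF2 HF3]].
  assert (Hb0 := simple_est_nonneg c d s).
  split; [|split].
  - intros k Hk x Hx. destruct (Rtotal_order x s) as [L|[E|G]].
    + rewrite patch_lt by auto. destruct (z k); [lra|apply HF1; auto].
    + subst. rewrite patch_at_s; auto.
    + rewrite patch_gt by auto. apply HF1; auto.
  - intros k Hk x y Hx Hy Hxy. destruct (Rtotal_order y s) as [Ly|[Ey|Gy]].
    + rewrite !patch_lt by lra. destruct (z k); [lra|apply HF2; auto].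
    + subst y. rewrite patch_at_s. destruct (Req_EM_T x s) as [Ex|Ex]; [subst; rewrite patch_at_s; lra|].
      rewrite patch_lt by lra. destruct (z k) eqn:Z; [apply Hb0; auto|apply (proj1 (Hnz k Hk Z)); auto; lra].
    + rewrite (patch_gt k y) by lra. destruct (Rtotal_order x s) as [Lx|[Ex|Gx]].
      * rewrite patch_lt by auto. destruct (z k); [apply HF1; auto|apply HF2; auto].
      * subst x. rewrite patch_at_s. destruct (z k) eqn:Z.
        -- rewrite simple_est_forced_zero by auto. apply HF1; auto.
        -- apply (proj2 (Hnz k Hk Z)); auto.
      * rewrite patch_gt by lra. apply HF2; auto.
  - intros x Hx. destruct (Rtotal_order x s) as [L|[E|G]].
    + eapply Rle_trans; [|apply (HF3 x Hx)]. rewrite !Fplus_sumL. apply sumL_le.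
      intros k Hk; apply in_seq in Hk. apply patch_below; auto; lia.
    + subst. pose proof (patch_Fext_at_s K ltac:(lia)) as E. rewrite Fext_ge in E by lia.
      pose proof (Hb0 K HC). lra.
    + rewrite Fplus_sumL, (sumL_ext _ (fun k => F k x)) by (intros; apply patch_gt; lra).
      rewrite <- Fplus_sumL. auto.
Qed.

Lemma patch_dominates_off_s o : In o d -> c (fst o) <> s ->
  Fext K F (snd o) (c (fst o)) <= Fext K patch (snd o) (c (fst o)).
Proof.
  intros Ho Hs. set (x := c (fst o)) in *.
  assert (Hx : inS c w x) by (eapply valid_data_inS; eauto).
  destruct (Rtotal_order x s) as [L|[E|G]]; [|contradiction|].
  - destruct (Nat.lt_ge_cases (snd o) K) as [Hk|Hk].
    + rewrite !Fext_lt, patch_lt by auto. destruct (z (snd o)) eqn:Z; [|lra].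
      pose proof (Hz _ Hk Z o Ho eq_refl). unfold x in L. lra.
    + rewrite !Fext_ge, !Fplus_sumL by auto.
      assert (sumL (fun j => patch j x) (seq 0 K) <= sumL (fun j => F j x) (seq 0 K)); [|lra].
      apply sumL_le. intros j Hj; apply in_seq in Hj. apply patch_below; auto; lia.
  - right. apply Fext_ext. intros j Hj. symmetry. apply patch_gt. lra.
Qed.

End Patch.

(* Under the hypotheses of the section, the likelihood of an MLE with
   positive likelihood factorises into the observations at s and the others;
   the patch does at least as well on the latter, so on the former the
   empirical frequencies cannot beat F. *)
Lemma mle_dominates_breve_at_s K c w d F s (z : nat -> bool) :
  valid_data K w d -> isMLE K c w d F -> 0 < lik K c d F -> 0 < cnt (at_s c s) d ->
  (forall k, (k < K)%nat -> z k = true -> forall o, In o d -> snd o = k -> s < c (fst o)) ->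
  (forall k, (k < K)%nat -> z k = false ->
      (forall x, inS c w x -> x < s -> F k x <= simple_est c d s k) /\
      (forall x, inS c w x -> s < x -> simple_est c d s k <= F k x)) ->
  prodL (fun o : obs => simple_est c d s (snd o)) (filter (at_s c s) d)
    <= prodL (fun o : obs => Fext K F (snd o) s) (filter (at_s c s) d).
Proof.
  intros Hv [HF Hmax] Hlik HC Hz Hnz.
  set (fac := fun G o => Fext K G (snd o) (c (fst o))).
  set (ds := filter (at_s c s) d). set (dn := filter (fun o => negb (at_s c s o)) d).
  assert (Hds : forall o, In o ds -> In o d /\ c (fst o) = s).
  { intros o Ho. apply filter_In in Ho. destruct Ho as [Ho V]. split; auto.
    unfold at_s in V. destruct (Req_EM_T (c (fst o)) s); auto; discriminate. }
  assert (Hdn : forall o, In o dn -> In o d /\ c (fst o) <> s).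
  { intros o Ho. apply filter_In in Ho. destruct Ho as [Ho V]. split; auto.
    unfold at_s in V. destruct (Req_EM_T (c (fst o)) s); auto; discriminate. }
  assert (Hsplit : forall G, lik K c d G = prodL (fac G) ds * prodL (fac G) dn)
    by (intros G; rewrite lik_prodL; apply prodL_split).
  assert (Hnn : forall o, In o d -> 0 <= fac F o)
    by (intros o Ho; apply (Fext_nonneg K c w); eauto using valid_data_inS).
  assert (Hout0 : 0 < prodL (fac F) dn).
  { assert (0 <= prodL (fac F) ds) by (apply prodL_nonneg; intros o Ho; apply Hnn, Hds, Ho).
    assert (0 <= prodL (fac F) dn) by (apply prodL_nonneg; intros o Ho; apply Hnn, Hdn, Ho).
    rewrite Hsplit in Hlik. destruct (Req_dec (prodL (fac F) dn) 0) as [E|E]; [|lra].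
    rewrite E in Hlik. lra. }
  assert (Hout : prodL (fac F) dn <= prodL (fac (patch c d F s z)) dn).
  { apply prodL_le. intros o Ho. destruct (Hdn o Ho).
    split; [apply Hnn; auto|apply patch_dominates_off_s with (w := w); auto]. }
  assert (Hat : prodL (fac (patch c d F s z)) ds = prodL (fun o : obs => simple_est c d s (snd o)) ds).
  { apply prodL_ext. intros o Ho. destruct (Hds o Ho) as [H1 H2]. unfold fac. rewrite H2.
    apply patch_Fext_at_s with (w := w); auto. apply (valid_labels K w d Hv), H1. }
  assert (Hl := Hmax _ (patch_inFK K c w d F s z Hv HF HC Hz Hnz)). rewrite !Hsplit, Hat in Hl.
  rewrite (prodL_ext (fun o : obs => Fext K F (snd o) s) (fac F) ds)
    by (intros o Ho; destruct (Hds o Ho) as [_ H2]; unfold fac; rewrite H2; reflexivity).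
  apply (Rmult_le_reg_r (prodL (fac F) dn)); auto.
  eapply Rle_trans; [|apply Hl]. apply Rmult_le_compat_l; [|lra].
  apply prodL_nonneg. intros o _. apply simple_est_nonneg; auto.
Qed.

(* Hence, by Gibbs' inequality, F at s equals the simple estimator. *)
Lemma mle_at_s_is_breve K c w d F s (z : nat -> bool) :
  valid_data K w d -> isMLE K c w d F -> 0 < lik K c d F -> 0 < cnt (at_s c s) d ->
  (forall k, (k < K)%nat -> z k = true -> forall o, In o d -> snd o = k -> s < c (fst o)) ->
  (forall k, (k < K)%nat -> z k = false ->
      (forall x, inS c w x -> x < s -> F k x <= simple_est c d s k) /\
      (forall x, inS c w x -> s < x -> simple_est c d s k <= F k x)) ->
  forall k, (k < K)%nat -> F k s = simple_est c d s k.
Proof.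
  intros Hv HM Hlik HC Hz Hnz k Hk.
  assert (Hdom := mle_dominates_breve_at_s K c w d F s z Hv HM Hlik HC Hz Hnz).
  assert (Hlen : (0 < length (filter (at_s c s) d))%nat) by (apply INR_lt; simpl; rewrite cnt_len; exact HC).
  assert (Hlab : forall o, In o (filter (at_s c s) d) -> (snd o <= K)%nat)
    by (intros o Ho; apply filter_In in Ho; apply (valid_labels K w d Hv), Ho).
  assert (Hs : inS c w s).
  { destruct (cnt_pos_ex _ _ HC) as [o [Ho V]]. unfold at_s in V.
    destruct (Req_EM_T (c (fst o)) s) as [Es|]; [|discriminate].
    rewrite <- Es. eapply valid_data_inS; eauto. }
  rewrite <- (Fext_lt K F k s Hk), simple_est_freq.
  apply (gibbs K (filter (at_s c s) d) (fun k => Fext K F k s) Hlab Hlen); try lia.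
  - intros j _. apply (Fext_nonneg K c w); auto. apply HM.
  - apply Fext_sum.
  - rewrite (prodL_ext _ (fun o : obs => simple_est c d s (snd o)))
      by (intros; symmetry; apply simple_est_freq).
    exact Hdom.
Qed.

Lemma mle_equals_breve K c w d F G s im ip eta M0 dl :
  valid_data K w d -> isMLE K c w d F -> inFK K c w G ->
  (forall o, In o d -> 0 < Fext K G (snd o) (c (fst o))) ->
  (0 < length d)%nat -> 0 <= dl -> (forall i, 0 <= w i) ->
  (forall i l, (i < M0)%nat -> (l <= K)%nat -> 0 < w i ->
      INR (length d) * (w i * Fext K G l (c i) - dl) <= cnt (Icell i l) d) ->
  (1 - sumL w (seq 0 M0)) + 2 * dl * INR M0 * INR (S K) < Rmin (w im) (w ip) * eta^2 / 4 ->
  (im < M0)%nat -> (ip < M0)%nat -> 0 < w im -> 0 < w ip -> 0 < eta ->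
  (forall x, inS c w x -> x < s -> forall k, (k < K)%nat -> G k s <> 0 ->
      x <= c im /\ G k (c im) + 2 * eta <= G k s) ->
  (forall x, inS c w x -> s < x -> forall k, (k < K)%nat -> G k s <> 0 ->
      c ip <= x /\ G k s + 2 * eta <= G k (c ip)) ->
  0 < cnt (at_s c s) d -> (forall k, (k < K)%nat -> Rabs (simple_est c d s k - G k s) <= eta) ->
  forall k, (k < K)%nat -> F k s = simple_est c d s k.
Proof.
  intros Hv HM HG Hpos Hn Hdl Hw Hcnt Hbound Him Hip Hwim Hwip Heta HB HA HC Hbr.
  assert (Hclose : forall i0, i0 = im \/ i0 = ip -> forall k, (k < K)%nat ->
            Rabs (G k (c i0) - F k (c i0)) < eta).
  { intros i0 Hi0 k Hk. rewrite <- (Fext_lt K G k), <- (Fext_lt K F k) by auto.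
    pose proof (Rmin_l (w im) (w ip)). pose proof (Rmin_r (w im) (w ip)).
    assert (0 < eta^2) by (apply pow_lt; lra).
    apply (mle_close_at_atom K c w d F G M0 dl eta i0); auto; try lia;
      destruct Hi0; subst; auto; nra. }
  assert (Hlik : 0 < lik K c d F).
  { eapply Rlt_le_trans; [|apply (proj2 HM G HG)]. rewrite lik_prodL. apply prodL_pos; auto. }
  assert (Hs : inS c w s).
  { destruct (cnt_pos_ex _ _ HC) as [o [Ho V]]. unfold at_s in V.
    destruct (Req_EM_T (c (fst o)) s) as [E|]; [|discriminate].
    rewrite <- E. eapply valid_data_inS; eauto. }
  assert (HinS : forall i, 0 < w i -> inS c w (c i)) by (intros i Hi; exists i; auto).
  apply (mle_at_s_is_breve K c w d F s (fun k => if Req_EM_T (G k s) 0 then true else false)); auto.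
  - intros k Hk Z o Ho Ek. destruct (Req_EM_T (G k s) 0) as [E|]; [|discriminate].
    pose proof (Hpos o Ho). rewrite Ek, Fext_lt in H by auto.
    destruct (Rlt_dec s (c (fst o))) as [L|L]; auto.
    pose proof (proj1 (proj2 HG) k Hk (c (fst o)) s (valid_data_inS K c w d o Hv Ho) Hs ltac:(lra)). lra.
  - intros k Hk Z. destruct (Req_EM_T (G k s) 0) as [|E]; [discriminate|].
    destruct HM as [[_ [HF2 _]] _]. pose proof (Hbr k Hk). split.
    + intros x Hx Hxs. destruct (HB x Hx Hxs k Hk E) as [Hxm Hg].
      pose proof (Hclose im (or_introl eq_refl) k Hk). pose proof (HF2 k Hk x (c im) Hx (HinS im Hwim) Hxm).
      apply Rabs_le_inv in H. apply Rabs_def2 in H0. lra.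
    + intros x Hx Hxs. destruct (HA x Hx Hxs k Hk E) as [Hxm Hg].
      pose proof (Hclose ip (or_intror eq_refl) k Hk). pose proof (HF2 k Hk (c ip) x (HinS ip Hwip) Hx Hxm).
      apply Rabs_le_inv in H. apply Rabs_def2 in H0. lra.
Qed.

Lemma breve_close K c d s W dl eta (p : nat -> R) :
  (forall o, In o d -> (snd o <= K)%nat) ->
  (forall k, (k <= K)%nat -> 0 <= p k) -> sumL p (seq 0 (S K)) = 1 ->
  0 < W -> (0 < length d)%nat -> 0 <= dl ->
  (forall k, (k <= K)%nat ->
     Rabs (cnt (Vcell c s k) d - INR (length d) * (W * p k)) <= INR (length d) * dl) ->
  (INR K + 1) * dl <= W / 2 -> 2 * (INR K + 2) * dl <= eta * W ->
  0 < cnt (at_s c s) d /\ forall k, (k <= K)%nat -> Rabs (simple_est c d s k - p k) <= eta.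
Proof.
  intros Hl Hp0 Hp1 HW Hn Hdl Hc Hd1 Hd2.
  set (n := INR (length d)) in *. assert (Hnp : 0 < n) by (apply lt_0_INR; auto).
  assert (Heta : 0 <= eta) by (pose proof (pos_INR K); nra).
  set (C := cnt (at_s c s) d).
  assert (HCW : Rabs (C - n * W) <= n * ((INR K + 1) * dl)).
  { unfold C. rewrite <- (regroup_cnt K (at_s c s) d Hl).
    replace (n * W) with (sumL (fun k => n * (W * p k)) (seq 0 (S K)))
      by (rewrite sumL_scal, sumL_scal, Hp1; ring).
    rewrite <- sumL_minus. eapply Rle_trans; [apply sumL_abs|].
    eapply Rle_trans; [apply sumL_le with (g := fun _ => n * dl)|].
    - intros k Hk; apply in_seq in Hk. apply Hc; lia.
    - rewrite sumL_const, length_seq, S_INR. right; ring. }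
  assert (HCp : n * W / 2 <= C).
  { assert (n * ((INR K + 1) * dl) <= n * (W / 2)) by (apply Rmult_le_compat_l; lra).
    apply Rabs_le_inv in HCW. lra. }
  assert (HnW : 0 < n * W / 2) by (unfold Rdiv; apply Rmult_lt_0_compat; [nra|lra]).
  split; [lra|]. intros k Hk.
  assert (Hpk0 : 0 <= p k) by auto.
  assert (Hpk1 : p k <= 1).
  { rewrite <- Hp1. apply (sumL_single p); [|apply in_seq; lia].
    intros a Ha; apply in_seq in Ha; apply Hp0; lia. }
  assert (E : simple_est c d s k - p k = (cnt (Vcell c s k) d - p k * C) / C)
    by (unfold simple_est; fold C; field; lra).
  rewrite E. unfold Rdiv. rewrite Rabs_mult, Rabs_inv, (Rabs_pos_eq C) by lra.
  assert (Hnum : Rabs (cnt (Vcell c s k) d - p k * C) <= n * ((INR K + 2) * dl)).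
  { replace (cnt (Vcell c s k) d - p k * C) with
      ((cnt (Vcell c s k) d - n * (W * p k)) + p k * (n * W - C)) by ring.
    eapply Rle_trans; [apply Rabs_triang|]. rewrite Rabs_mult, (Rabs_pos_eq (p k) Hpk0).
    pose proof (Hc k Hk). rewrite Rabs_minus_sym in HCW.
    assert (p k * Rabs (n * W - C) <= 1 * (n * ((INR K + 1) * dl)))
      by (apply Rmult_le_compat; auto using Rabs_pos).
    nra. }
  apply (Rmult_le_reg_r C); [lra|]. rewrite Rmult_assoc, Rinv_l, Rmult_1_r by lra.
  assert (n * ((INR K + 2) * dl) <= eta * C).
  { apply Rle_trans with (eta * (n * W / 2)); [|apply Rmult_le_compat_l; lra].
    replace (eta * (n * W / 2)) with (n * (eta * W / 2)) by (unfold Rdiv; ring).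
    apply Rmult_le_compat_l; lra. }
  lra.
Qed.

(** * The naive estimator as an MLE with one label *)

Definition relabel (k : nat) (o : obs) : obs := (fst o, if Nat.eqb (snd o) k then 0%nat else 1%nat).

Definition Jcell (i k : nat) (o : obs) : bool := Nat.eqb i (fst o) && negb (Nat.eqb (snd o) k).

Lemma likk_lik c d k H : likk c d k H = lik 1 c (map (relabel k) d) (fun _ => H).
Proof.
  unfold likk, lik. induction d as [|o d IH]; simpl; auto. rewrite IH. f_equal.
  destruct (Nat.eqb (snd o) k); simpl; [reflexivity|]. rewrite Fext1_1. reflexivity.
Qed.

Lemma naive_isMLE K c w d Ft k : isNaive K c w d Ft -> (k < K)%nat ->
  isMLE 1 c w (map (relabel k) d) (fun _ => Ft k).
Proof.
  intros Hn Hk. destruct (Hn k Hk) as [H1 H2]. split; [exact H1|].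
  intros G HG. rewrite <- likk_lik.
  assert (E : lik 1 c (map (relabel k) d) G = lik 1 c (map (relabel k) d) (fun _ => G 0%nat)).
  { unfold lik. f_equal. apply map_ext. intros o. apply Fext_ext. intros j Hj.
    replace j with 0%nat by lia. reflexivity. }
  rewrite E, <- likk_lik. apply H2.
  destruct HG as [G1 [G2 G3]]. split; [|split].
  - intros k' Hk'. apply G1; auto.
  - intros k' Hk'. apply G2; auto.
  - intros x Hx. pose proof (G3 x Hx). unfold Fplus in *. simpl in *. lra.
Qed.

Lemma relabel_valid K w d k : valid_data K w d -> valid_data 1 w (map (relabel k) d).
Proof.
  unfold valid_data. rewrite !Forall_forall. intros Hv o' Ho'.
  apply in_map_iff in Ho'. destruct Ho' as [o [<- Ho]]. destruct (Hv o Ho).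
  unfold relabel; simpl. split; auto. destruct (Nat.eqb (snd o) k); lia.
Qed.

Lemma cnt_relabel_vs c s d k : cnt (at_s c s) (map (relabel k) d) = cnt (at_s c s) d.
Proof. rewrite cnt_map. reflexivity. Qed.

Lemma cnt_relabel_Icell0 d i k : cnt (Icell i 0) (map (relabel k) d) = cnt (Icell i k) d.
Proof.
  rewrite cnt_map. apply cnt_ext. intros o _. unfold Icell, relabel; simpl.
  destruct (Nat.eqb_spec (snd o) k); subst; simpl; [rewrite Nat.eqb_refl; reflexivity|].
  destruct (Nat.eqb_spec k (snd o)); [lia|reflexivity].
Qed.

Lemma cnt_relabel_Icell1 d i k : cnt (Icell i 1) (map (relabel k) d) = cnt (Jcell i k) d.
Proof.
  rewrite cnt_map. apply cnt_ext. intros o _. unfold Icell, Jcell, relabel; simpl.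
  destruct (Nat.eqb_spec (snd o) k); reflexivity.
Qed.

Lemma simple_est_relabel c d s k : simple_est c (map (relabel k) d) s 0 = simple_est c d s k.
Proof.
  unfold simple_est. rewrite !cnt_map. f_equal; apply cnt_ext; intros o _; unfold Vcell, relabel, at_s; simpl.
  destruct (Nat.eqb_spec (snd o) k); destruct (Req_EM_T (c (fst o)) s); simpl; auto.
Qed.

Lemma inF1_component K c w G k : inFK K c w G -> (k < K)%nat -> inFK 1 c w (fun _ => G k).
Proof.
  intros HG Hk. pose proof HG as [A [B _]]. split; [|split].
  - intros k' _ x Hx. apply A; auto.
  - intros k' _ x y Hx Hy Hxy. apply B; auto.
  - intros x Hx. unfold Fplus; simpl. pose proof (Fext_le1 K c w G k x HG Hx).
    rewrite Fext_lt in H by auto. lra.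
Qed.

Lemma relabel_pos K c w d G k : valid_data K w d -> inFK K c w G -> (k < K)%nat ->
  (forall o, In o d -> 0 < Fext K G (snd o) (c (fst o))) ->
  forall o', In o' (map (relabel k) d) -> 0 < Fext 1 (fun _ => G k) (snd o') (c (fst o')).
Proof.
  intros Hv HG Hk Hpos o' Ho'. apply in_map_iff in Ho'. destruct Ho' as [o [<- Ho]].
  unfold relabel; simpl. pose proof (Hpos o Ho).
  destruct (Nat.eqb_spec (snd o) k) as [E|E].
  - rewrite Fext1_0. rewrite E, Fext_lt in H by auto. auto.
  - rewrite Fext1_1. pose proof (two_terms K c w G (snd o) k (c (fst o)) HG
      (valid_data_inS K c w d o Hv Ho) (valid_labels K w d Hv o Ho) ltac:(lia) E).
    rewrite (Fext_lt K G k) in H0 by auto. lra.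
Qed.

(* The same conclusion for the k-th component of a naive estimator, obtained
   by applying mle_equals_breve to the relabelled data (one label). *)
Lemma naive_equals_breve K c w d Ft G s im ip eta M0 dl k :
  valid_data K w d -> isNaive K c w d Ft -> inFK K c w G -> (k < K)%nat ->
  (forall o, In o d -> 0 < Fext K G (snd o) (c (fst o))) ->
  (0 < length d)%nat -> 0 <= dl -> (forall i, 0 <= w i) ->
  (forall i, (i < M0)%nat -> 0 < w i ->
      INR (length d) * (w i * G k (c i) - dl) <= cnt (Icell i k) d /\
      INR (length d) * (w i * (1 - G k (c i)) - dl) <= cnt (Jcell i k) d) ->
  (1 - sumL w (seq 0 M0)) + 2 * dl * INR M0 * 2 < Rmin (w im) (w ip) * eta^2 / 4 ->
  (im < M0)%nat -> (ip < M0)%nat -> 0 < w im -> 0 < w ip -> 0 < eta ->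
  (forall x, inS c w x -> x < s -> G k s <> 0 -> x <= c im /\ G k (c im) + 2 * eta <= G k s) ->
  (forall x, inS c w x -> s < x -> G k s <> 0 -> c ip <= x /\ G k s + 2 * eta <= G k (c ip)) ->
  0 < cnt (at_s c s) d -> Rabs (simple_est c d s k - G k s) <= eta ->
  Ft k s = simple_est c d s k.
Proof.
  intros Hv Hn HG Hk Hpos Hlen Hdl Hw Hcnt Hbound Him Hip Hwim Hwip Heta HB HA HC Hbr.
  set (d' := map (relabel k) d).
  assert (Hlen' : length d' = length d) by apply length_map.
  assert (Hcnt' : forall i l, (i < M0)%nat -> (l <= 1)%nat -> 0 < w i ->
      INR (length d') * (w i * Fext 1 (fun _ => G k) l (c i) - dl) <= cnt (Icell i l) d').
  { intros i l Hi Hl Hwi. rewrite Hlen'. destruct (Hcnt i Hi Hwi) as [H0 H1]. unfold d'.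
    destruct l as [|[|l]]; [| |lia].
    - rewrite Fext1_0, cnt_relabel_Icell0. exact H0.
    - rewrite Fext1_1, cnt_relabel_Icell1. exact H1. }
  assert (Hbound' : (1 - sumL w (seq 0 M0)) + 2 * dl * INR M0 * INR (S 1)
                    < Rmin (w im) (w ip) * eta^2 / 4)
    by (replace (INR (S 1)) with 2 by (simpl; ring); exact Hbound).
  assert (HC' : 0 < cnt (at_s c s) d') by (unfold d'; rewrite cnt_relabel_vs; exact HC).
  rewrite <- simple_est_relabel.
  apply (mle_equals_breve 1 c w d' (fun _ => Ft k) (fun _ => G k) s im ip eta M0 dl
           (relabel_valid K w d k Hv) (naive_isMLE K c w d Ft k Hn Hk) (inF1_component K c w G k HG Hk)
           (relabel_pos K c w d G k Hv HG Hk Hpos) ltac:(rewrite Hlen'; exact Hlen) Hdl Hw Hcnt' Hbound'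
           Him Hip Hwim Hwip Heta); auto; try lia.
  intros k' Hk'. replace k' with 0%nat by lia. unfold d'. rewrite simple_est_relabel. exact Hbr.
Qed.

Definition neighbours K F0 (c w : nat -> R) s (im ip is : nat) (eta : R) : Prop :=
  0 < eta /\ 0 < w im /\ 0 < w ip /\ 0 < w is /\ c is = s /\
  (forall x, inS c w x -> x < s -> forall k, (k < K)%nat -> F0 k s <> 0 ->
     x <= c im /\ F0 k (c im) + 2 * eta <= F0 k s) /\
  (forall x, inS c w x -> s < x -> forall k, (k < K)%nat -> F0 k s <> 0 ->
     c ip <= x /\ F0 k s + 2 * eta <= F0 k (c ip)).

Lemma common_threshold (K : nat) (Q : nat -> R -> Prop) :
  (forall k e e', 0 < e' <= e -> Q k e -> Q k e') ->
  (forall k, (k < K)%nat -> exists e, 0 < e /\ Q k e) ->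
  exists e, 0 < e /\ forall k, (k < K)%nat -> Q k e.
Proof.
  intros Hm. induction K; intros H.
  - exists 1. split; [lra|]. intros; lia.
  - destruct IHK as [e1 [He1 H1]]; [intros; apply H; lia|].
    destruct (H K ltac:(lia)) as [e2 [He2 H2]].
    exists (Rmin e1 e2). split; [apply Rmin_glb_lt; auto|].
    pose proof (Rmin_l e1 e2). pose proof (Rmin_r e1 e2). pose proof (Rmin_glb_lt e1 e2 0 He1 He2).
    intros k Hk. destruct (Nat.eq_dec k K).
    + subst. apply (Hm K e2); auto.
    + apply (Hm k e1); [lra|]. apply H1; lia.
Qed.

Lemma lower_neighbour K F0 c w s is : 0 < w is -> regular K F0 c w s ->
  (exists k, (k < K)%nat /\ F0 k s <> 0) ->
  exists im, 0 < w im /\ forall k, (k < K)%nat -> F0 k s <> 0 -> exists e, 0 < e /\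
    forall x, inS c w x -> x < s -> x <= c im /\ F0 k (c im) + 2 * e <= F0 k s.
Proof.
  intros His Hreg [k0 [Hk0 Hz0]].
  destruct Hreg as [Hall|[Hlo _]]; [exfalso; apply Hz0, Hall; auto|].
  destruct (classic (exists x, inS c w x /\ x < s)) as [Ex|NEx].
  - destruct (Hlo Ex) as [sm [[Hub _] [[im [Hwim Hcim]] Hgap]]]. exists im. split; auto.
    intros k Hk E. destruct (Hgap k Hk) as [G|G]; [|contradiction].
    exists ((F0 k s - F0 k sm) / 2). split; [lra|]. intros y Hy Hys. rewrite Hcim.
    split; [apply Hub; split; auto|lra].
  - exists is. split; auto. intros k Hk E. exists 1. split; [lra|].
    intros y Hy Hys. exfalso. apply NEx. exists y; auto.
Qed.

Lemma upper_neighbour K F0 c w s is : 0 < w is -> regular K F0 c w s ->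
  (exists k, (k < K)%nat /\ F0 k s <> 0) ->
  exists ip, 0 < w ip /\ forall k, (k < K)%nat -> F0 k s <> 0 -> exists e, 0 < e /\
    forall x, inS c w x -> s < x -> c ip <= x /\ F0 k s + 2 * e <= F0 k (c ip).
Proof.
  intros His Hreg [k0 [Hk0 Hz0]].
  destruct Hreg as [Hall|[_ Hhi]]; [exfalso; apply Hz0, Hall; auto|].
  destruct (classic (exists x, inS c w x /\ s < x)) as [Ex|NEx].
  - destruct (Hhi Ex) as [sp [[Hlb _] [[ip [Hwip Hcip]] Hgap]]]. exists ip. split; auto.
    intros k Hk E. destruct (Hgap k Hk) as [G|G]; [|contradiction].
    exists ((F0 k sp - F0 k s) / 2). split; [lra|]. intros y Hy Hys. rewrite Hcip.
    split; [apply Hlb; split; auto|lra].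
  - exists is. split; auto. intros k Hk E. exists 1. split; [lra|].
    intros y Hy Hys. exfalso. apply NEx. exists y; auto.
Qed.

Lemma regular_neighbours K F0 c w s : inS c w s -> regular K F0 c w s ->
  exists im ip is eta, neighbours K F0 c w s im ip is eta.
Proof.
  intros [is [Hwis Hcis]] Hreg.
  destruct (classic (exists k, (k < K)%nat /\ F0 k s <> 0)) as [Hnz|Hz].
  2:{ exists is, is, is, 1. unfold neighbours.
      assert (Hnone : forall k, (k < K)%nat -> F0 k s <> 0 -> False)
        by (intros k Hk E; apply Hz; exists k; auto).
      split; [lra|]. do 4 (split; auto).
      split; intros y _ _ k Hk E; exfalso; apply (Hnone k Hk E). }
  destruct (lower_neighbour K F0 c w s is Hwis Hreg Hnz) as [im [Hwim Lo]].
  destruct (upper_neighbour K F0 c w s is Hwis Hreg Hnz) as [ip [Hwip Hi]].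
  destruct (common_threshold K (fun k e => F0 k s <> 0 ->
      (forall x, inS c w x -> x < s -> x <= c im /\ F0 k (c im) + 2 * e <= F0 k s) /\
      (forall x, inS c w x -> s < x -> c ip <= x /\ F0 k s + 2 * e <= F0 k (c ip))))
    as [eta [Heta H]].
  - intros k e e' He' Q E. destruct (Q E) as [Q1 Q2]. split.
    + intros y Hy Hys. destruct (Q1 y Hy Hys). split; auto; lra.
    + intros y Hy Hys. destruct (Q2 y Hy Hys). split; auto; lra.
  - intros k Hk. destruct (classic (F0 k s = 0)) as [Z|Z].
    + exists 1. split; [lra|]. intros E; contradiction.
    + destruct (Lo k Hk Z) as [e1 [He1 H1]]. destruct (Hi k Hk Z) as [e2 [He2 H2]].
      pose proof (Rmin_l e1 e2). pose proof (Rmin_r e1 e2).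
      exists (Rmin e1 e2). split; [apply Rmin_glb_lt; auto|]. intros _. split.
      * intros y Hy Hys. destruct (H1 y Hy Hys). split; auto; lra.
      * intros y Hy Hys. destruct (H2 y Hy Hys). split; auto; lra.
  - exists im, ip, is, eta. unfold neighbours. do 5 (split; auto).
    split; intros y Hy Hys k Hk E; apply (H k Hk E); auto.
Qed.

Lemma pobs_il K F0 c w i l : (l <= K)%nat -> pobs K F0 c w (i, l) = w i * Fext K F0 l (c i).
Proof. intros H. unfold pobs. simpl. destruct (Nat.leb_spec l K); [auto|lia]. Qed.

Lemma pobs_nonneg K F0 c w o : valid_F0 K F0 -> (forall i, 0 <= w i) -> 0 <= pobs K F0 c w o.
Proof.
  intros HF Hw. unfold pobs. destruct (Nat.leb (snd o) K); [|lra].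
  destruct (Req_dec (w (fst o)) 0) as [E|E]; [rewrite E; lra|].
  apply Rmult_le_pos; auto. apply (Fext_nonneg K c w); [apply valid_F0_inFK; auto|].
  exists (fst o). split; auto. pose proof (Hw (fst o)); lra.
Qed.

Lemma pobs_pos K F0 c w o : 0 < pobs K F0 c w o -> (forall i, 0 <= w i) ->
  0 < w (fst o) /\ (snd o <= K)%nat /\ 0 < Fext K F0 (snd o) (c (fst o)).
Proof.
  intros H Hw. unfold pobs in H. destruct (Nat.leb_spec (snd o) K); [|lra].
  pose proof (Hw (fst o)). destruct (Req_dec (w (fst o)) 0) as [E|E]; [rewrite E in H; lra|].
  split; [lra|]. split; auto.
  destruct (Rlt_dec 0 (Fext K F0 (snd o) (c (fst o)))); auto.
  assert (w (fst o) * Fext K F0 (snd o) (c (fst o)) <= 0) by nra. lra.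
Qed.

(* Lower bounds on the atom cells, and two-sided bounds on the cells at s
   (whose probabilities are W F0_k(s) for a mass W >= ws of atoms at s). *)
Definition good_counts K F0 (c w : nat -> R) s ws M0 dl (d : list obs) : Prop :=
  (forall i l, (i < M0)%nat -> (l <= K)%nat ->
     INR (length d) * (pobs K F0 c w (i, l) - dl) <= cnt (Icell i l) d) /\
  (forall i k, (i < M0)%nat -> (k < K)%nat ->
     INR (length d) * (w i * (1 - F0 k (c i)) - dl) <= cnt (Jcell i k) d) /\
  (exists W, ws <= W /\ forall k, (k <= K)%nat ->
     Rabs (cnt (Vcell c s k) d - INR (length d) * (W * Fext K F0 k s)) <= INR (length d) * dl).

(* The tolerance dl and the truncation M0 are small (resp. large) enough for
   the deterministic lemmas at the neighbours im, ip and at s. *)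
Definition tolerance K (w : nat -> R) (im ip is : nat) eta M0 dl : Prop :=
  0 < dl /\ (im < M0)%nat /\ (ip < M0)%nat /\ (is < M0)%nat /\
  (1 - sumL w (seq 0 M0)) + 2 * dl * INR M0 * INR (S K) < Rmin (w im) (w ip) * eta^2 / 4 /\
  (INR K + 1) * dl <= w is / 2 /\ 2 * (INR K + 2) * dl <= eta * w is.

Lemma good_sample_event K F0 c w s Fhat Ftil im ip is eta M0 dl d :
  (1 <= K)%nat -> valid_F0 K F0 -> (forall i, 0 <= w i) ->
  (forall data, valid_data K w data -> isMLE K c w data (Fhat data)) ->
  (forall data, valid_data K w data -> isNaive K c w data (Ftil data)) ->
  neighbours K F0 c w s im ip is eta -> tolerance K w im ip is eta M0 dl ->
  (0 < length d)%nat -> (forall o, In o d -> 0 < pobs K F0 c w o) ->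
  good_counts K F0 c w s (w is) M0 dl d ->
  event_at K c Fhat Ftil s d.
Proof.
  intros HK HF0v Hw Hhat Htil [Heta [Hwim [Hwip [Hwis [Hcis [HB HA]]]]]]
    [Hdl [Him [Hip [His [Hbound [Hd1 Hd2]]]]]] Hn Hpos [HI [HJ [W [HW HV]]]].
  assert (HF0 : inFK K c w F0) by (apply valid_F0_inFK; auto).
  assert (Hv : valid_data K w d).
  { unfold valid_data. rewrite Forall_forall. intros o Ho.
    destruct (pobs_pos K F0 c w o (Hpos o Ho) Hw) as [A [B _]]. auto. }
  assert (Fpos : forall o, In o d -> 0 < Fext K F0 (snd o) (c (fst o)))
    by (intros o Ho; apply (pobs_pos K F0 c w o (Hpos o Ho) Hw)).
  assert (Hs : inS c w s) by (exists is; auto).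
  destruct (breve_close K c d s W dl eta (fun k => Fext K F0 k s) (valid_labels K w d Hv))
    as [HC Hbr]; auto; try lra.
  { intros; apply (Fext_nonneg K c w); auto. }
  { apply Fext_sum. }
  { apply Rle_trans with (eta * w is); auto. apply Rmult_le_compat_l; lra. }
  assert (Hbrk : forall k, (k < K)%nat -> Rabs (simple_est c d s k - F0 k s) <= eta).
  { intros k Hk. pose proof (Hbr k ltac:(lia)). rewrite Fext_lt in H by auto. auto. }
  assert (HI' : forall i l, (i < M0)%nat -> (l <= K)%nat -> 0 < w i ->
      INR (length d) * (w i * Fext K F0 l (c i) - dl) <= cnt (Icell i l) d)
    by (intros i l Hi Hl _; rewrite <- pobs_il by auto; auto).
  assert (Hmle := mle_equals_breve K c w d (Fhat d) F0 s im ip eta M0 dl Hv (Hhat d Hv) HF0 Fpos Hn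
    ltac:(lra) Hw HI' Hbound Him Hip Hwim Hwip Heta HB HA HC Hbrk).
  intros k Hk.
  assert (Hnaive : Ftil d k s = simple_est c d s k).
  { apply (naive_equals_breve K c w d (Ftil d) F0 s im ip eta M0 dl k Hv (Htil d Hv) HF0 Hk Fpos Hn
      ltac:(lra) Hw); auto.
    - intros i Hi _. split; auto. pose proof (HI i k Hi ltac:(lia)).
      rewrite pobs_il, Fext_lt in H by lia. exact H.
    - assert (HS : 2 <= INR (S K)) by (replace 2 with (INR 2) by (simpl; ring); apply le_INR; lia).
      assert (0 <= 2 * dl * INR M0) by (pose proof (pos_INR M0); nra).
      assert (2 * dl * INR M0 * 2 <= 2 * dl * INR M0 * INR (S K)) by (apply Rmult_le_compat_l; lra).
      lra. }
  rewrite (Hmle k Hk), Hnaive, (breve_eq K c w d s k Hv HC). split; reflexivity.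
Qed.

(** * Samples of size n over a finite set of observations *)

Fixpoint samples (O : list obs) (n : nat) : list (list obs) :=
  match n with
  | O => [[]]
  | S m => flat_map (fun o => map (cons o) (samples O m)) O
  end.

Lemma samples_in O n d : In d (samples O n) -> length d = n /\ forall o, In o d -> In o O.
Proof.
  revert d. induction n; intros d H; simpl in H.
  - destruct H as [<-|[]]. split; auto. intros o [].
  - apply in_flat_map in H. destruct H as [o [Ho H]]. apply in_map_iff in H.
    destruct H as [d' [<- H]]. destruct (IHn d' H) as [H1 H2].
    split; [simpl; auto|]. intros o' [<-|Ho']; auto.
Qed.

Lemma flat_cons_nodup (T : list (list obs)) (O : list obs) : NoDup T -> NoDup O ->
  NoDup (flat_map (fun o => map (cons o) T) O).
Proof.
  intros HT HO. induction HO as [|o O' Hno HO' IH]; simpl; [constructor|].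
  apply NoDup_app; auto.
  - apply NoDup_map_NoDup_ForallPairs; auto. intros x y _ _ E; inversion E; auto.
  - intros x Hx Hx'. apply in_map_iff in Hx. destruct Hx as [d [<- _]].
    apply in_flat_map in Hx'. destruct Hx' as [o' [Ho' Hx']]. apply in_map_iff in Hx'.
    destruct Hx' as [d' [E _]]. inversion E; subst. auto.
Qed.

Lemma samples_nodup O n : NoDup O -> NoDup (samples O n).
Proof.
  intros HO. induction n; simpl; [constructor; [intros []|constructor]|].
  apply flat_cons_nodup; auto.
Qed.

Lemma sum_samples O n (f : obs -> R) (h : list obs -> R) :
  sumL (fun d => prodL f d * h d) (samples O (S n)) =
  sumL (fun o => f o * sumL (fun d => prodL f d * h (o :: d)) (samples O n)) O.
Proof.
  cbn [samples]. rewrite sumL_flat_map. apply sumL_ext. intros o _. rewrite sumL_map, <- sumL_scal.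
  apply sumL_ext. intros d _. unfold prodL; simpl. ring.
Qed.

Lemma mass_samples O n (f : obs -> R) : sumL (prodL f) (samples O n) = (sumL f O) ^ n.
Proof.
  induction n; [unfold sumL, prodL; simpl; lra|].
  rewrite (sumL_ext _ (fun d => prodL f d * 1)) by (intros; ring).
  rewrite sum_samples. rewrite (sumL_ext _ (fun o => sumL (prodL f) (samples O n) * f o)).
  - rewrite sumL_scal, IHn. simpl. ring.
  - intros o _. rewrite Rmult_comm. f_equal. apply sumL_ext. intros; ring.
Qed.

Section Moments.
Variables (O : list obs) (f : obs -> R) (P : obs -> bool) (q : R).
Hypothesis Hq : sumL (fun o => indc P o * f o) O = q * sumL f O.

Lemma moment1 n : sumL (fun d => prodL f d * (cnt P d - INR n * q)) (samples O n) = 0.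
Proof.
  induction n; [unfold sumL, prodL, cnt; simpl; ring|].
  rewrite sum_samples. rewrite (sumL_ext _ (fun o => f o * ((indc P o - q) * (sumL f O)^n))).
  - rewrite (sumL_ext _ (fun o => (sumL f O)^n * (indc P o * f o - q * f o))) by (intros; ring).
    rewrite sumL_scal, sumL_minus, sumL_scal, Hq. ring.
  - intros o _. f_equal.
    rewrite (sumL_ext _ (fun d => (indc P o - q) * prodL f d + prodL f d * (cnt P d - INR n * q))).
    + rewrite sumL_plus, IHn, sumL_scal, mass_samples. ring.
    + intros d _. rewrite cnt_cons, S_INR. ring.
Qed.

Lemma moment2 n :
  sumL (fun d => prodL f d * (cnt P d - INR n * q)^2) (samples O n) = INR n * (sumL f O)^n * (q * (1 - q)).
Proof.
  set (Z := sumL f O).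
  assert (Hv : sumL (fun o => f o * (indc P o - q)^2) O = Z * (q * (1 - q))).
  { rewrite (sumL_ext _ (fun o => (1 - 2 * q) * (indc P o * f o) + q^2 * f o)).
    - rewrite sumL_plus, !sumL_scal, Hq. fold Z. ring.
    - intros o _. unfold indc. destruct (P o); ring. }
  induction n; [unfold sumL, prodL, cnt; simpl; ring|].
  rewrite sum_samples.
  rewrite (sumL_ext _ (fun o => Z^n * (f o * (indc P o - q)^2) + (INR n * Z^n * (q * (1 - q))) * f o)).
  - rewrite sumL_plus, !sumL_scal, Hv. fold Z. rewrite S_INR. simpl. ring.
  - intros o _.
    rewrite (sumL_ext _ (fun d => (indc P o - q)^2 * prodL f d
        + 2 * (indc P o - q) * (prodL f d * (cnt P d - INR n * q)) + prodL f d * (cnt P d - INR n * q)^2)).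
    + rewrite !sumL_plus, !sumL_scal, IHn, moment1, mass_samples. fold Z. ring.
    + intros d _. rewrite cnt_cons, S_INR. ring.
Qed.

End Moments.

Definition rel_mass (f : obs -> R) (O : list obs) (P : obs -> bool) : R :=
  sumL (fun o => indc P o * f o) O / sumL f O.

Definition good_sample (f : obs -> R) (O : list obs) (cl : list (obs -> bool)) (dl : R) (n : nat)
  (d : list obs) : bool :=
  forallb (fun P => if Rle_dec (Rabs (cnt P d - INR n * rel_mass f O P)) (INR n * dl)
                    then true else false) cl.

Lemma deviation_mass O n (f : obs -> R) P : 0 < sumL f O <= 1 ->
  sumL (fun d => prodL f d * (cnt P d - INR n * rel_mass f O P)^2) (samples O n) <= INR n / 4.
Proof.
  intros HZ. set (Z := sumL f O) in *.
  rewrite (moment2 O f P (rel_mass f O P)) by (unfold rel_mass; fold Z; field; lra). fold Z.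
  assert (HZn : 0 <= Z^n <= 1).
  { split; [apply pow_le; lra|]. clear -HZ. induction n; simpl; [lra|].
    assert (0 <= Z^n) by (apply pow_le; lra). nra. }
  set (q := rel_mass f O P). assert (q * (1 - q) <= /4) by (pose proof (pow2_ge_0 (q - /2)); nra).
  pose proof (pos_INR n).
  destruct (Rle_dec 0 (q * (1 - q))).
  - assert (Z^n * (q * (1 - q)) <= /4) by nra. nra.
  - assert (Z^n * (q * (1 - q)) <= 0) by nra. nra.
Qed.

Lemma bad_sample_le f O cl dl n d : 0 < INR n * dl ->
  (if good_sample f O cl dl n d then 0 else 1) <=
  sumL (fun P => (cnt P d - INR n * rel_mass f O P)^2 / (INR n * dl)^2) cl.
Proof.
  intros Hnd. set (D := (INR n * dl)^2). assert (HD : 0 < D) by (unfold D; apply pow_lt; lra).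
  assert (Hsq : forall P, 0 <= (cnt P d - INR n * rel_mass f O P)^2 / D).
  { intros P. unfold Rdiv. apply Rmult_le_pos; [apply pow2_ge_0|left; apply Rinv_0_lt_compat; auto]. }
  destruct (good_sample f O cl dl n d) eqn:G; [apply sumL_nonneg; auto|].
  apply Bool.not_true_iff_false in G.
  assert (exists P, In P cl /\ ~ Rabs (cnt P d - INR n * rel_mass f O P) <= INR n * dl) as [P [HP HP2]].
  { apply NNPP. intros Hno. apply G. apply forallb_forall. intros P HP.
    destruct (Rle_dec (Rabs (cnt P d - INR n * rel_mass f O P)) (INR n * dl)); auto.
    exfalso; apply Hno; exists P; auto. }
  eapply Rle_trans; [|apply (sumL_single (fun P => (cnt P d - INR n * rel_mass f O P)^2 / D) cl P); auto].
  apply (Rmult_le_reg_r D); auto. unfold Rdiv. rewrite Rmult_assoc, Rinv_l, Rmult_1_l, Rmult_1_r by lra.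
  rewrite <- pow2_abs. unfold D. apply Rnot_le_lt in HP2. nra.
Qed.

(* Chebyshev: the good samples carry all but |cl| / (4 n dl^2) of the mass. *)
Lemma good_mass O n (f : obs -> R) cl dl :
  (forall o, In o O -> 0 <= f o) -> 0 < sumL f O <= 1 -> (0 < n)%nat -> 0 < dl ->
  (sumL f O)^n - INR (length cl) / (4 * INR n * dl^2)
    <= sumL (prodL f) (filter (good_sample f O cl dl n) (samples O n)).
Proof.
  intros Hf HZ Hn Hdl. set (g := good_sample f O cl dl n).
  assert (Hnr : 0 < INR n) by (apply lt_0_INR; auto).
  assert (Hpsi : forall d, In d (samples O n) -> 0 <= prodL f d).
  { intros d Hd. apply prodL_nonneg. intros o Ho. apply Hf. apply (samples_in O n d Hd); auto. }
  assert (Htot : sumL (prodL f) (samples O n) = sumL (prodL f) (filter g (samples O n))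
                 + sumL (fun d => prodL f d * (if g d then 0 else 1)) (samples O n)).
  { rewrite sumL_filter, <- sumL_plus. apply sumL_ext. intros d _. destruct (g d); ring. }
  rewrite mass_samples in Htot.
  assert (Hbad : sumL (fun d => prodL f d * (if g d then 0 else 1)) (samples O n)
                 <= INR (length cl) / (4 * INR n * dl^2)).
  { eapply Rle_trans.
    { apply sumL_le with (g := fun d => sumL (fun P => / (INR n * dl)^2 *
          (prodL f d * (cnt P d - INR n * rel_mass f O P)^2)) cl).
      intros d Hd.
      apply Rle_trans with
        (prodL f d * sumL (fun P => (cnt P d - INR n * rel_mass f O P)^2 / (INR n * dl)^2) cl).
      - apply Rmult_le_compat_l; [auto|]. apply bad_sample_le. nra.
      - right. rewrite <- sumL_scal. apply sumL_ext. intros P _. field. nra. }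
    rewrite (sumL_swap (fun d P => / (INR n * dl)^2 * (prodL f d * (cnt P d - INR n * rel_mass f O P)^2))).
    apply Rle_trans with (sumL (fun _ => / (INR n * dl)^2 * (INR n / 4)) cl).
    - apply sumL_le. intros P _. rewrite sumL_scal. apply Rmult_le_compat_l.
      + left. apply Rinv_0_lt_compat. apply pow_lt. nra.
      + apply deviation_mass; auto.
    - rewrite sumL_const. right. field. split; lra. }
  lra.
Qed.

Lemma sumL_seq_sum (w : nat -> R) m : sumL w (seq 0 (S m)) = sum_f_R0 w m.
Proof.
  induction m; [unfold sumL; simpl; ring|].
  rewrite sumL_seq_last, IHm. reflexivity.
Qed.

Lemma partial_le1 (w : nat -> R) : (forall i, 0 <= w i) -> infinite_sum w 1 ->
  forall m, sumL w (seq 0 m) <= 1.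
Proof.
  intros Hw Hs m.
  assert (Hmono : forall m k, sumL w (seq 0 m) <= sumL w (seq 0 (m + k))).
  { intros m0 k. rewrite seq_app, sumL_app.
    pose proof (sumL_nonneg w (seq (0 + m0) k) (fun i _ => Hw i)). lra. }
  apply Rnot_lt_le. intros H. destruct (Hs (sumL w (seq 0 m) - 1)) as [N HN]; [lra|].
  pose proof (HN (m + N)%nat ltac:(lia)). rewrite <- sumL_seq_sum in H0. pose proof (Hmono m (S N)).
  replace (S (m + N)) with (m + S N)%nat in H0 by lia.
  unfold Rdist, Rabs in H0. destruct (Rcase_abs _); lra.
Qed.

Lemma partial_cv (w : nat -> R) : infinite_sum w 1 ->
  forall e, 0 < e -> exists N, forall m, (N <= m)%nat -> 1 - e < sumL w (seq 0 m).
Proof.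
  intros Hs e He. destruct (Hs e He) as [N HN]. exists (S N). intros m Hm.
  destruct m; [lia|]. rewrite sumL_seq_sum. pose proof (HN m ltac:(lia)).
  unfold Rdist, Rabs in H. destruct (Rcase_abs _); lra.
Qed.

Lemma bernoulli x n : 0 <= x <= 1 -> 1 - INR n * (1 - x) <= x ^ n.
Proof.
  intros Hx. induction n; [simpl; lra|]. rewrite S_INR. simpl.
  assert (0 <= x ^ n) by (apply pow_le; lra).
  assert (x * (1 - INR n * (1 - x)) <= x * x ^ n) by (apply Rmult_le_compat_l; lra).
  assert (0 <= INR n * ((1 - x) * (1 - x))) by (apply Rmult_le_pos; [apply pos_INR|nra]). nra.
Qed.

Lemma rel_mass_close (f : obs -> R) O P dp : (forall o, In o O -> 0 <= f o) -> 1/2 <= sumL f O <= 1 ->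
  2 * (1 - sumL f O) <= dp -> Rabs (rel_mass f O P - sumL (fun o => indc P o * f o) O) <= dp.
Proof.
  intros Hf HZ Hd. unfold rel_mass. set (Z := sumL f O) in *. set (p := sumL (fun o => indc P o * f o) O).
  assert (Hp0 : 0 <= p).
  { apply sumL_nonneg. intros o Ho. unfold indc. destruct (P o); [rewrite Rmult_1_l; auto|lra]. }
  assert (HpZ : p <= Z).
  { apply sumL_le. intros o Ho. unfold indc. pose proof (Hf o Ho). destruct (P o); lra. }
  replace (p / Z - p) with (p * (1 - Z) / Z) by (field; lra).
  rewrite Rabs_pos_eq.
  2:{ unfold Rdiv. apply Rmult_le_pos; [apply Rmult_le_pos; lra|left; apply Rinv_0_lt_compat; lra]. }
  apply Rle_trans with (2 * (1 - Z)); auto.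
  apply (Rmult_le_reg_r Z); [lra|]. unfold Rdiv. rewrite Rmult_assoc, Rinv_l by lra.
  assert (p * (1 - Z) <= Z * (1 - Z)) by (apply Rmult_le_compat_r; lra). nra.
Qed.

Lemma exists_nat_gt r : exists N : nat, r < INR N.
Proof.
  destruct (archimed (Rmax r 0)) as [H1 _].
  assert (0 <= IZR (up (Rmax r 0))) by (pose proof (Rmax_r r 0); lra).
  exists (Z.to_nat (up (Rmax r 0))). rewrite INR_IZR_INZ, Z2Nat.id.
  - pose proof (Rmax_l r 0); lra.
  - apply le_IZR; auto.
Qed.

Lemma good_sample_deviation (f : obs -> R) O cl dp n d P :
  (forall o, In o O -> 0 <= f o) -> 1/2 <= sumL f O <= 1 -> 2 * (1 - sumL f O) <= dp ->
  good_sample f O cl dp n d = true -> In P cl ->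
  Rabs (cnt P d - INR n * sumL (fun o => indc P o * f o) O) <= INR n * (2 * dp).
Proof.
  intros Hf HZ Hd Hg HP. unfold good_sample in Hg. rewrite forallb_forall in Hg. pose proof (Hg P HP).
  destruct (Rle_dec (Rabs (cnt P d - INR n * rel_mass f O P)) (INR n * dp)) as [Hr|]; [|discriminate].
  assert (Hq := rel_mass_close f O P dp Hf HZ Hd). pose proof (pos_INR n).
  replace (cnt P d - INR n * sumL (fun o => indc P o * f o) O) with
    ((cnt P d - INR n * rel_mass f O P) + INR n * (rel_mass f O P - sumL (fun o => indc P o * f o) O))
    by ring.
  eapply Rle_trans; [apply Rabs_triang|]. rewrite Rabs_mult, (Rabs_pos_eq (INR n)) by lra.
  assert (INR n * Rabs (rel_mass f O P - sumL (fun o => indc P o * f o) O) <= INR n * dp)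
    by (apply Rmult_le_compat_l; lra).
  lra.
Qed.

Lemma good_samples_mass (f : obs -> R) O cl dp n eps :
  (forall o, In o O -> 0 <= f o) -> 1/2 <= sumL f O <= 1 -> (0 < n)%nat -> 0 < dp -> 0 < eps ->
  INR (length cl) <= 2 * eps * dp^2 * INR n -> INR n * (1 - sumL f O) <= eps / 2 ->
  1 - eps <= sumL (prodL f) (filter (good_sample f O cl dp n) (samples O n)).
Proof.
  intros Hf HZ Hn Hdp Heps Hcl HZn.
  assert (Hnp : 0 < INR n) by (apply lt_0_INR; auto).
  assert (Hm := good_mass O n f cl dp Hf ltac:(lra) Hn Hdp).
  assert (Hb := bernoulli (sumL f O) n ltac:(lra)).
  assert (INR (length cl) / (4 * INR n * dp^2) <= eps / 2).
  { assert (0 < dp^2) by (apply pow_lt; lra).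
    apply (Rmult_le_reg_r (4 * INR n * dp^2)); [nra|]. unfold Rdiv. rewrite Rmult_assoc, Rinv_l by nra.
    replace (eps * / 2 * (4 * INR n * dp ^ 2)) with (2 * eps * dp^2 * INR n) by (field; lra). lra. }
  lra.
Qed.

Lemma sample_concentration (f : obs -> R) (O : nat -> list obs) (cl : list (obs -> bool)) dl eps :
  (forall M, NoDup (O M)) -> (forall M o, In o (O M) -> 0 <= f o) ->
  (forall M, sumL f (O M) <= 1) ->
  (forall e, 0 < e -> exists N, forall M, (N <= M)%nat -> 1 - e < sumL f (O M)) ->
  0 < dl -> 0 < eps ->
  exists N, forall n, (N <= n)%nat -> forall M0, exists M, (M0 <= M)%nat /\
    exists L, NoDup L /\
      (forall d, In d L -> length d = n /\ (forall o, In o d -> In o (O M)) /\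
         forall P, In P cl ->
           Rabs (cnt P d - INR n * sumL (fun o => indc P o * f o) (O M)) <= INR n * dl) /\
      1 - eps <= sumL (prodL f) L.
Proof.
  intros HOnd Hf0 HZ1 HZcv Hdl Heps.
  set (dp := dl / 2). assert (Hdp : 0 < dp) by (unfold dp; lra).
  destruct (exists_nat_gt (INR (length cl) / (2 * eps * dp^2))) as [N2 HN2].
  exists (S N2). intros n Hn M0.
  assert (Hnr : INR N2 <= INR n) by (apply le_INR; lia).
  assert (Hnp : 0 < INR n) by (apply lt_0_INR; lia).
  set (e3 := Rmin (1/2) (Rmin (dp/2) (eps / (2 * INR n)))).
  assert (He3 : 0 < e3) by (unfold e3; repeat apply Rmin_glb_lt; try lra; apply Rdiv_lt_0_compat; lra).
  assert (He31 : e3 <= 1/2) by apply Rmin_l.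
  assert (He32 : e3 <= dp/2) by (eapply Rle_trans; [apply Rmin_r|apply Rmin_l]).
  assert (He33 : e3 <= eps / (2 * INR n)) by (eapply Rle_trans; [apply Rmin_r|apply Rmin_r]).
  destruct (HZcv e3 He3) as [N3 HN3].
  exists (N3 + M0)%nat. split; [lia|].
  assert (HZ : 1 - e3 < sumL f (O (N3 + M0)%nat) <= 1) by (split; [apply HN3; lia|apply HZ1]).
  exists (filter (good_sample f (O (N3 + M0)%nat) cl dp n) (samples (O (N3 + M0)%nat) n)). split; [|split].
  - apply NoDup_filter, samples_nodup, HOnd.
  - intros d Hd. apply filter_In in Hd. destruct Hd as [Hd Hg].
    destruct (samples_in _ n d Hd) as [Hlen HinO]. do 2 (split; auto). intros P HP.
    replace dl with (2 * dp) by (unfold dp; field).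
    apply (good_sample_deviation f _ cl dp n d P); auto; [apply Hf0|lra|lra].
  - assert (Hcl : INR (length cl) <= 2 * eps * dp^2 * INR n).
    { assert (Hc : 0 < 2 * eps * dp^2) by (apply Rmult_lt_0_compat; [lra|apply pow_lt; lra]).
      apply (Rmult_lt_compat_l (2 * eps * dp^2)) in HN2; [|exact Hc].
      replace (2 * eps * dp ^ 2 * (INR (length cl) / (2 * eps * dp ^ 2))) with (INR (length cl))
        in HN2 by (field; lra).
      assert (2 * eps * dp^2 * INR N2 <= 2 * eps * dp^2 * INR n) by (apply Rmult_le_compat_l; lra).
      lra. }
    assert (HZn : INR n * (1 - sumL f (O (N3 + M0)%nat)) <= eps / 2).
    { apply Rle_trans with (INR n * e3); [apply Rmult_le_compat_l; lra|].
      apply Rle_trans with (INR n * (eps / (2 * INR n))); [apply Rmult_le_compat_l; lra|].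
      right. field. lra. }
    apply (good_samples_mass f (O (N3 + M0)%nat) cl dp n eps); auto; [apply Hf0|lra|lia].
Qed.

Definition pairs (M K : nat) : list obs :=
  flat_map (fun i => map (fun l => (i, l)) (seq 0 (S K))) (seq 0 M).
Definition trunc_support K F0 c w M : list obs := filter (fun o => posb (pobs K F0 c w o)) (pairs M K).

Lemma trunc_support_nodup K F0 c w M : NoDup (trunc_support K F0 c w M).
Proof.
  apply NoDup_filter. unfold pairs. generalize (seq_NoDup M 0). generalize (seq 0 M). intros I HI.
  induction HI as [|i I' Hni HI' IH]; cbn [flat_map]; [constructor|].
  apply NoDup_app; auto.
  - apply NoDup_map_NoDup_ForallPairs; [|apply seq_NoDup]. intros x y _ _ E; inversion E; auto.
  - intros x Hx Hx'. apply in_map_iff in Hx. destruct Hx as [l [<- _]].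
    apply in_flat_map in Hx'. destruct Hx' as [i' [Hi' Hx']]. apply in_map_iff in Hx'.
    destruct Hx' as [l' [E _]]. inversion E; subst. auto.
Qed.

Lemma trunc_support_pos K F0 c w M o : In o (trunc_support K F0 c w M) -> 0 < pobs K F0 c w o.
Proof.
  intros H. apply filter_In in H. destruct H as [_ H]. unfold posb in H.
  destruct (Rlt_dec 0 _); [auto|discriminate].
Qed.

Lemma sum_trunc_support K F0 c w M (h : obs -> R) : valid_F0 K F0 -> (forall i, 0 <= w i) ->
  (forall o, pobs K F0 c w o = 0 -> h o = 0) ->
  sumL h (trunc_support K F0 c w M) = sumL (fun i => sumL (fun l => h (i, l)) (seq 0 (S K))) (seq 0 M).
Proof.
  intros HF Hw Hh. unfold trunc_support. rewrite sumL_filter. unfold pairs. rewrite sumL_flat_map.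
  apply sumL_ext. intros i _. rewrite sumL_map. apply sumL_ext. intros l _.
  unfold posb. destruct (Rlt_dec 0 (pobs K F0 c w (i, l))); auto.
  symmetry. apply Hh. pose proof (pobs_nonneg K F0 c w (i, l) HF Hw). lra.
Qed.

Lemma mass_trunc_support K F0 c w M : valid_F0 K F0 -> (forall i, 0 <= w i) ->
  sumL (pobs K F0 c w) (trunc_support K F0 c w M) = sumL w (seq 0 M).
Proof.
  intros HF Hw. rewrite sum_trunc_support by auto. apply sumL_ext. intros i _.
  rewrite (sumL_ext _ (fun l => w i * Fext K F0 l (c i))).
  - rewrite sumL_scal, Fext_sum. ring.
  - intros l Hl. apply in_seq in Hl. apply pobs_il. lia.
Qed.

Lemma cell_prob_I K F0 c w M i l : valid_F0 K F0 -> (forall i, 0 <= w i) -> (i < M)%nat -> (l <= K)%nat ->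
  sumL (fun o => indc (Icell i l) o * pobs K F0 c w o) (trunc_support K F0 c w M) = pobs K F0 c w (i, l).
Proof.
  intros HF Hw Hi Hl. rewrite sum_trunc_support by (auto; intros o E; rewrite E; ring).
  rewrite (sumL_ext _ (fun i' => (if Nat.eqb i i' then 1 else 0) * pobs K F0 c w (i', l))).
  - apply (ind_sum (fun i' => pobs K F0 c w (i', l))). lia.
  - intros i' _.
    rewrite (sumL_ext _ (fun l' => (if Nat.eqb i i' then 1 else 0) *
               ((if Nat.eqb l l' then 1 else 0) * pobs K F0 c w (i', l')))).
    + rewrite sumL_scal, (ind_sum (fun l' => pobs K F0 c w (i', l'))) by lia. reflexivity.
    + intros l' _. unfold indc, Icell; simpl. destruct (Nat.eqb i i'), (Nat.eqb l l'); simpl; ring.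
Qed.

Lemma cell_prob_J K F0 c w M i k : valid_F0 K F0 -> (forall i, 0 <= w i) -> (i < M)%nat -> (k < K)%nat ->
  sumL (fun o => indc (Jcell i k) o * pobs K F0 c w o) (trunc_support K F0 c w M) = w i * (1 - F0 k (c i)).
Proof.
  intros HF Hw Hi Hk. rewrite sum_trunc_support by (auto; intros o E; rewrite E; ring).
  rewrite (sumL_ext _ (fun i' => (if Nat.eqb i i' then 1 else 0) * (w i' * (1 - F0 k (c i'))))).
  - apply (ind_sum (fun i' => w i' * (1 - F0 k (c i')))). lia.
  - intros i' _.
    rewrite (sumL_ext _ (fun l' => (if Nat.eqb i i' then 1 else 0) *
               (pobs K F0 c w (i', l') - (if Nat.eqb k l' then 1 else 0) * pobs K F0 c w (i', l')))).
    + rewrite sumL_scal, sumL_minus, (ind_sum (fun l' => pobs K F0 c w (i', l'))) by lia.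
      rewrite (sumL_ext (fun l' => pobs K F0 c w (i', l')) (fun l' => w i' * Fext K F0 l' (c i'))).
      * rewrite sumL_scal, Fext_sum, pobs_il, Fext_lt by lia. ring.
      * intros l' Hl'. apply in_seq in Hl'. apply pobs_il; lia.
    + intros l' _. unfold indc, Jcell; simpl. rewrite (Nat.eqb_sym l' k).
      destruct (Nat.eqb i i'), (Nat.eqb k l'); simpl; ring.
Qed.

Definition mass_at (c w : nat -> R) (s : R) (M : nat) : R :=
  sumL (fun i => if Req_EM_T (c i) s then w i else 0) (seq 0 M).

Lemma cell_prob_V K F0 c w M s k : valid_F0 K F0 -> (forall i, 0 <= w i) -> (k <= K)%nat ->
  sumL (fun o => indc (Vcell c s k) o * pobs K F0 c w o) (trunc_support K F0 c w M)
    = mass_at c w s M * Fext K F0 k s.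
Proof.
  intros HF Hw Hk. rewrite sum_trunc_support by (auto; intros o E; rewrite E; ring).
  unfold mass_at. rewrite Rmult_comm, <- sumL_scal. apply sumL_ext. intros i' _.
  rewrite (sumL_ext _ (fun l' => (if Req_EM_T (c i') s then 1 else 0) *
             ((if Nat.eqb k l' then 1 else 0) * pobs K F0 c w (i', l')))).
  - rewrite sumL_scal, (ind_sum (fun l' => pobs K F0 c w (i', l'))), pobs_il by lia.
    destruct (Req_EM_T (c i') s) as [E|E]; [rewrite E|]; ring.
  - intros l' _. unfold indc, Vcell, at_s; simpl. rewrite (Nat.eqb_sym l' k).
    destruct (Nat.eqb k l'), (Req_EM_T (c i') s); simpl; ring.
Qed.

(* The finitely many cells whose counts the deterministic argument uses. *)
Definition model_cells K (c : nat -> R) s M0 : list (obs -> bool) :=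
  map (fun p => Icell (fst p) (snd p)) (list_prod (seq 0 M0) (seq 0 (S K))) ++
  map (fun p => Jcell (fst p) (snd p)) (list_prod (seq 0 M0) (seq 0 K)) ++
  map (Vcell c s) (seq 0 (S K)).

Lemma cells_good_counts K F0 c w s is M0 M dl d :
  valid_F0 K F0 -> (forall i, 0 <= w i) -> (M0 <= M)%nat -> (is < M)%nat -> c is = s ->
  (forall P, In P (model_cells K c s M0) ->
     Rabs (cnt P d - INR (length d) * sumL (fun o => indc P o * pobs K F0 c w o) (trunc_support K F0 c w M))
       <= INR (length d) * dl) ->
  good_counts K F0 c w s (w is) M0 dl d.
Proof.
  intros HF Hw HM His Hcis Hcells. split; [|split].
  - intros i l Hi Hl. assert (HP : In (Icell i l) (model_cells K c s M0)).
    { apply in_or_app. left. apply in_map_iff. exists (i, l). split; auto. apply in_prod; apply in_seq; lia. }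
    pose proof (Hcells _ HP). rewrite cell_prob_I in H by (auto; lia).
    apply Rabs_le_inv in H. lra.
  - intros i k Hi Hk. assert (HP : In (Jcell i k) (model_cells K c s M0)).
    { apply in_or_app. right. apply in_or_app. left. apply in_map_iff. exists (i, k). split; auto.
      apply in_prod; apply in_seq; lia. }
    pose proof (Hcells _ HP). rewrite cell_prob_J in H by (auto; lia).
    apply Rabs_le_inv in H. lra.
  - exists (mass_at c w s M). split.
    + unfold mass_at.
      pose proof (sumL_single (fun i => if Req_EM_T (c i) s then w i else 0) (seq 0 M) is) as E.
      cbv beta in E. destruct (Req_EM_T (c is) s); [|contradiction]. apply E; [|apply in_seq; lia].
      intros i _. destruct (Req_EM_T (c i) s); auto; lra.
    + intros k Hk. assert (HP : In (Vcell c s k) (model_cells K c s M0)).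
      { apply in_or_app. right. apply in_or_app. right. apply in_map. apply in_seq; lia. }
      pose proof (Hcells _ HP). rewrite cell_prob_V in H by auto. exact H.
Qed.

Lemma tolerance_exists K F0 c w s im ip is eta : (1 <= K)%nat -> infinite_sum w 1 ->
  neighbours K F0 c w s im ip is eta -> exists M0 dl, tolerance K w im ip is eta M0 dl.
Proof.
  intros HK Hw1 [Heta [Hwim [Hwip [Hwis _]]]].
  set (wmin := Rmin (w im) (w ip)). assert (Hwmin : 0 < wmin) by (apply Rmin_glb_lt; auto).
  assert (Heta2 : 0 < wmin * eta^2) by (apply Rmult_lt_0_compat; [|apply pow_lt]; lra).
  destruct (partial_cv w Hw1 (wmin * eta^2 / 8)) as [N1 HN1]; [lra|].
  set (M0 := (N1 + im + ip + is + 1)%nat). exists M0.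
  assert (Htau : 1 - sumL w (seq 0 M0) < wmin * eta^2 / 8)
    by (pose proof (HN1 M0 ltac:(unfold M0; lia)); lra).
  pose proof (pos_INR M0) as HM0. pose proof (pos_INR K) as HKr.
  set (d1 := wmin * eta^2 / (32 * (INR M0 + 1) * (INR K + 1))).
  set (d2 := w is / (2 * (INR K + 1))). set (d3 := eta * w is / (2 * (INR K + 2))).
  assert (Hd1 : 0 < d1) by (unfold d1; apply Rdiv_lt_0_compat; [lra|]; apply Rmult_lt_0_compat; lra).
  assert (Hd2 : 0 < d2) by (unfold d2; apply Rdiv_lt_0_compat; lra).
  assert (Hd3 : 0 < d3) by (unfold d3; apply Rdiv_lt_0_compat; nra).
  exists (Rmin d1 (Rmin d2 d3)). set (dl := Rmin d1 (Rmin d2 d3)).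
  assert (Hdl1 : dl <= d1) by apply Rmin_l.
  assert (Hdl2 : dl <= d2) by (eapply Rle_trans; [apply Rmin_r|apply Rmin_l]).
  assert (Hdl3 : dl <= d3) by (eapply Rle_trans; [apply Rmin_r|apply Rmin_r]).
  assert (Hdl : 0 < dl) by (unfold dl; repeat apply Rmin_glb_lt; auto).
  repeat split; auto; try (unfold M0; lia).
  - fold wmin. rewrite S_INR.
    assert (2 * dl * INR M0 * (INR K + 1) <= 2 * d1 * (INR M0 + 1) * (INR K + 1)).
    { apply Rmult_le_compat_r; [lra|]. apply Rmult_le_compat; lra. }
    assert (2 * d1 * (INR M0 + 1) * (INR K + 1) = wmin * eta^2 / 16)
      by (unfold d1; field; split; apply Rgt_not_eq; lra).
    lra.
  - apply Rle_trans with ((INR K + 1) * d2); [apply Rmult_le_compat_l; lra|].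
    unfold d2. right. field. lra.
  - apply Rle_trans with (2 * (INR K + 2) * d3); [apply Rmult_le_compat_l; lra|].
    unfold d3. right. field. lra.
Qed.

Lemma psample_prodL K F0 c w d : psample K F0 c w d = prodL (pobs K F0 c w) d.
Proof. unfold psample, prodL. induction d; simpl; auto. rewrite IHd. auto. Qed.

Theorem lemma2 (K : nat) (HK : (1 <= K)%nat)
  (F0 : nat -> R -> R) (HF0 : valid_F0 K F0)
  (c w : nat -> R) (Hw0 : forall i, 0 <= w i)
  (Hw1 : infinite_sum w 1)
  (s : R) (Hs : inS c w s) (Hreg : regular K F0 c w s)
  (Fhat Ftil : list obs -> nat -> R -> R)
  (Hhat : forall data, valid_data K w data -> isMLE K c w data (Fhat data))
  (Htil : forall data, valid_data K w data -> isNaive K c w data (Ftil data)) :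
  forall eps, 0 < eps ->
    exists N : nat, forall n : nat, (N <= n)%nat ->
      exists L : list (list obs),
        NoDup L /\
        Forall (fun data => length data = n /\ event_at K c Fhat Ftil s data) L /\
        1 - eps <= fold_right Rplus 0 (map (psample K F0 c w) L).
Proof.
  intros eps Heps.
  destruct (regular_neighbours K F0 c w s Hs Hreg) as [im [ip [is [eta Hnb]]]].
  destruct (tolerance_exists K F0 c w s im ip is eta HK Hw1 Hnb) as [M0 [dl Htol]].
  destruct (sample_concentration (pobs K F0 c w) (trunc_support K F0 c w) (model_cells K c s M0) dl eps)
    as [N HN]; auto using trunc_support_nodup, pobs_nonneg; try apply Htol.
  { intros M. rewrite mass_trunc_support by auto. apply partial_le1; auto. }
  { intros e He. destruct (partial_cv w Hw1 e He) as [N0 HN0]. exists N0. intros M HM.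
    rewrite mass_trunc_support by auto. auto. }
  exists (S N). intros n Hn.
  destruct (HN n ltac:(lia) (S (M0 + is))) as [M [HM [L [HL [Hgood Hmass]]]]].
  exists L. split; [auto|split].
  - apply Forall_forall. intros d Hd. destruct (Hgood d Hd) as [Hlen [HinO Hcells]]. split; auto.
    rewrite <- Hlen in Hcells.
    apply (good_sample_event K F0 c w s Fhat Ftil im ip is eta M0 dl d); auto; try lia.
    + intros o Ho. apply (trunc_support_pos K F0 c w M), HinO, Ho.
    + apply (cells_good_counts K F0 c w s is M0 M dl d); auto; try lia. apply Hnb.
  - rewrite fold_sumL, (sumL_ext _ (prodL (pobs K F0 c w))) by (intros; apply psample_prodL). auto.
Qed.
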